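(* Let $\phi\in\mathcal{BF}$ and set $\beta:=-\omega_0^{\phi'}$. Assume that the L\'evy measure of $\phi$ has a density $\mu:(0,\infty)\to(0,\infty)$ such that $t\mapsto e^{\beta t}\mu(t)$ is non-increasing, and let $\phi_e$ be the extension of $\phi$ to $(-\beta,\infty)$. (i) There is a constant $c_1>0$ such that $\mu(t)\le -c_1 t^{-3}\phi_e''(t^{-1}-\beta)e^{-\beta t}$ for all $t>0$. (ii) If there exist constants $\theta>0$, $0\le\Lambda_1<\Lambda_2\le\infty$ and $\gamma>0$ such that \[ \frac{\phi_e''(\lambda x-\beta)}{\phi_e''(\lambda-\beta)}\le\theta x^{-\gamma}\quad\text{for all } x\ge1,\ \lambda\in(\Lambda_1,\Lambda_2), \] then there exist constants $c_2>0$ and $\delta\in(0,1)$ such that $\mu(t)\ge -c_2 t^{-3}\phi_e''(t^{-1}-\beta)e^{-\beta t}$ for all $t\in(\delta\Lambda_2^{-1},\delta\Lambda_1^{-1})$ (conventions $1/0=\infty$, $1/\infty=0$).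
   Context: A function $\phi:(0,\infty)\to[0,\infty)$ is a Bernstein function, $\phi\in\mathcal{BF}$, if it is $C^\infty$ and $(-1)^{n-1}\phi^{(n)}(\lambda)\ge0$ for all $n\in\mathbb{N}$, $\lambda>0$. Every $\phi\in\mathcal{BF}$ has a unique representation $\phi(\lambda)=a+b\lambda+\int_{(0,\infty)}(1-e^{-\lambda t})\mu(dt)$ with $a,b\ge0$ and a measure $\mu$ on $(0,\infty)$ with $\int(1\wedge t)\mu(dt)<\infty$, called the L\'evy measure of $\phi$. Then $\phi'$ is completely monotone ($C^\infty$ with $(-1)^n(\phi')^{(n)}\ge0$). For a completely monotone $f$ with $f^{(n)}(0+):=\lim_{\lambda\to0+}f^{(n)}(\lambda)\in[-\infty,\infty]$: if all $f^{(n)}(0+)$ are finite, $\omega_0^f:=\inf\{\lambda\in\mathbb{R}:\sum_{n\ge0}\frac{f^{(n)}(0+)}{n!}\lambda^n\text{ converges}\}$, otherwise $\omega_0^f:=0$. With $\beta:=-\omega_0^{\phi'}\in[0,\infty]$, the extension $\phi_e:(-\beta,\infty)\to\mathbb{R}$ is $\phi_e=\phi$ on $(0,\infty)$ and, if $\beta>0$, $\phi_e(\lambda)=\sum_{n\ge0}\frac{\phi^{(n)}(0+)}{n!}\lambda^n$ for $\lambda\in(-\beta,0]$ (all $\phi^{(n)}(0+):=\lim_{\lambda\to0+}\phi^{(n)}(\lambda)$ are then finite); $\phi_e$ is $C^\infty$ on $(-\beta,\infty)$. *)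

From Stdlib Require Import Reals Lra Arith Factorial.
Open Scope R_scope.

Definition lim_right0 (g : R -> R) (L : R) : Prop :=
  forall eps, eps > 0 -> exists del, del > 0 /\
    forall x, 0 < x < del -> Rabs (g x - L) < eps.

Definition deriv_seq (phi : R -> R) (D : nat -> R -> R) : Prop :=
  (forall x, 0 < x -> D 0%nat x = phi x) /\
  (forall n x, 0 < x -> derivable_pt_lim (D n) x (D (S n) x)).

Definition bernstein (phi : R -> R) : Prop :=
  exists D, deriv_seq phi D /\
    (forall x, 0 < x -> 0 <= phi x) /\
    (forall n x, 0 < x -> 0 <= (-1) ^ n * D (S n) x).

Definition improper_int0inf (f : R -> R) (l : R) : Prop :=
  (forall a b, 0 < a -> a <= b -> inhabited (Riemann_integrable f a b)) /\
  (forall eps, eps > 0 -> exists del M, 0 < del <= M /\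
     forall a b (pr : Riemann_integrable f a b),
       0 < a < del -> M < b -> Rabs (RiemannInt pr - l) < eps).

Definition pser_conv (c : nat -> R) (lam : R) : Prop :=
  exists l, infinite_sum (fun n => c n / INR (fact n) * lam ^ n) l.

(* beta = - omega_0^{phi'} where phi' has derivatives D (S n);
   f^(n)(0+) = lim_{0+} D (S n) *)
Definition beta_spec (D : nat -> R -> R) (beta : R) : Prop :=
  (exists c : nat -> R, (forall n, lim_right0 (D (S n)) (c n)) /\
     (forall lam, pser_conv c lam -> - beta <= lam) /\
     (forall m, (forall lam, pser_conv c lam -> m <= lam) -> m <= - beta))
  \/
  ((~ exists c : nat -> R, forall n, lim_right0 (D (S n)) (c n)) /\ beta = 0).

Definition extension (phi : R -> R) (D : nat -> R -> R) (beta : R)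
    (phie : R -> R) : Prop :=
  (forall lam, 0 < lam -> phie lam = phi lam) /\
  (forall lam, - beta < lam <= 0 ->
     exists a : nat -> R, (forall n, lim_right0 (D n) (a n)) /\
       infinite_sum (fun n => a n / INR (fact n) * lam ^ n) (phie lam)).

(* Lambda2 in (0, oo]: None encodes +oo *)
Definition lt_ext (x : R) (L : option R) : Prop :=
  match L with Some l => x < l | None => True end.

From Stdlib Require Import Reals Lra Lia ZArith ClassicalEpsilon Classical.
From Coquelicot Require Import Coquelicot.
Open Scope R_scope.

(* Write [ν(t) = e^{βt} μ(t)] (nonincreasing).  The heart of the proof is the
   Lévy–Khintchine representation on the whole extension domain,
       φ_e(z) - a - b z = ∫_0^∞ (1 - e^{-zt}) μ(t) dt     for all z > -β.
   For z > 0 it is the hypothesis.  For -β < z <= 0 we differentiate under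
   the integral ([φ^{(n+1)} = b[n=0] + (-1)^n M_{n+1}] with the Laplace
   moments [M_k(λ) = ∫ t^k e^{-λt} μ]), identify the Taylor coefficients of
   [φ] at [0+] with the moments [∫ t^{n+1} μ], and sum the exponential series
   under the integral by monotone convergence.
   Second symmetric differences of this representation squeeze [-φ_e''(y)]:
       ∫ t² e^{-yt} μ  <=  -Δ_h²φ_e(y)/h²  <=  ∫ t² e^{-(y-h)t} μ.
   (i) follows from the left inequality on the window [[t/2, t]] at
   [y = 1/t - β]; (ii) from the right one, split at [t], where the part below
   [t] is compared with [-φ_e''(λx - β)] and absorbed using the ratio
   hypothesis at a point [x] where [θ x^{-γ}] is small. *)

(* Real-valued forms of Coquelicot's integral rules (stated with [+], [*]
   instead of the module operations [plus], [scal], so that they apply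
   directly to goals about real functions). *)

Lemma ex_RInt_Rplus (f g : R -> R) a b :
  ex_RInt f a b -> ex_RInt g a b -> ex_RInt (fun t => f t + g t) a b.
Proof. intros; apply (ex_RInt_plus f g); auto. Qed.

Lemma ex_RInt_Rscal (f : R -> R) a b c :
  ex_RInt f a b -> ex_RInt (fun t => c * f t) a b.
Proof. intros; apply (ex_RInt_scal f a b c); auto. Qed.

Lemma RInt_Rplus (f g : R -> R) a b : ex_RInt f a b -> ex_RInt g a b ->
  RInt (fun t => f t + g t) a b = RInt f a b + RInt g a b.
Proof. intros; apply (RInt_plus f g); auto. Qed.

Lemma RInt_Rscal (f : R -> R) a b c :
  ex_RInt f a b -> RInt (fun t => c * f t) a b = c * RInt f a b.
Proof. intros; apply (RInt_scal f a b c); auto. Qed.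

Lemma RInt_Rchasles (f : R -> R) a b c : ex_RInt f a b -> ex_RInt f b c ->
  RInt f a b + RInt f b c = RInt f a c.
Proof. intros; apply (RInt_Chasles f a b c); auto. Qed.

Lemma RInt_Rext (f g : R -> R) a b : (forall x, f x = g x) -> RInt f a b = RInt g a b.
Proof. intros h. apply RInt_ext. intros; apply h. Qed.

Lemma RInt_Rconst a b c : RInt (fun _ => c) a b = c * (b - a).
Proof. rewrite RInt_const. unfold scal; simpl; unfold mult; simpl. ring. Qed.

Lemma ex_RInt_Rsub_left (f : R -> R) a b c :
  a <= b <= c -> ex_RInt f a c -> ex_RInt f a b.
Proof. intros; apply (@ex_RInt_Chasles_1 R_CompleteNormedModule f a b c); auto. Qed.

Lemma ex_RInt_Rsub_right (f : R -> R) a b c :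
  a <= b <= c -> ex_RInt f a c -> ex_RInt f b c.
Proof. intros; apply (@ex_RInt_Chasles_2 R_CompleteNormedModule f a b c); auto. Qed.

Lemma ex_RInt_Rjoin (f : R -> R) a b c :
  ex_RInt f a b -> ex_RInt f b c -> ex_RInt f a c.
Proof. intros; apply (@ex_RInt_Chasles R_NormedModule f a b c); auto. Qed.

Lemma ex_RInt_Rext (f g : R -> R) a b :
  (forall x, Rmin a b < x < Rmax a b -> f x = g x) -> ex_RInt f a b -> ex_RInt g a b.
Proof. intros; apply (@ex_RInt_ext R_NormedModule f g a b); auto. Qed.

Lemma ex_RInt_Rcont (f : R -> R) a b : (forall z, continuity_pt f z) -> ex_RInt f a b.
Proof.
  intros h. apply (@ex_RInt_continuous R_CompleteNormedModule).
  intros; apply continuity_pt_filterlim; auto.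
Qed.

Lemma ex_RInt_uniform_limit (F : R -> R) a b : a <= b ->
  (forall eta, 0 < eta -> exists H, ex_RInt H a b /\
     forall t, a <= t <= b -> Rabs (F t - H t) <= eta) ->
  ex_RInt F a b.
Proof.
  intros hab HU. apply ex_RInt_Reals_1. intro eps.
  set (eta := eps / (2 * (b - a + 1))).
  assert (heta : 0 < eta).
  { unfold eta. destruct eps as [e he]; simpl. apply Rdiv_lt_0_compat; lra. }
  destruct (constructive_indefinite_description _ (HU eta heta)) as [H [HH HB]].
  apply ex_RInt_Reals_0 in HH.
  assert (he2 : 0 < eps / 2) by (destruct eps; simpl; lra).
  destruct (HH (mkposreal _ he2)) as [phi [psi [Hp Hi]]].
  exists phi, (mkStepFun (StepFun_P28 1 psi (mkStepFun (StepFun_P4 a b eta)))).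
  split.
  - intros t Ht. simpl. unfold fct_cte.
    rewrite Rmin_left, Rmax_right in Ht by lra.
    specialize (Hp t). rewrite Rmin_left, Rmax_right in Hp by lra.
    specialize (Hp Ht). specialize (HB t Ht).
    replace (F t - phi t) with ((F t - H t) + (H t - phi t)) by ring.
    eapply Rle_trans. apply Rabs_triang. lra.
  - rewrite StepFun_P30, StepFun_P18. simpl in Hi.
    eapply Rle_lt_trans. apply Rabs_triang.
    rewrite Rabs_mult, Rabs_R1, (Rabs_right (eta * (b - a))).
    2:{ apply Rle_ge, Rmult_le_pos; lra. }
    assert (eta * (b - a) <= eps / 2).
    { unfold eta. destruct eps as [e he]; simpl.
      apply Rle_trans with (e / (2 * (b - a + 1)) * (b - a + 1)).
      - apply Rmult_le_compat_l; [apply Rlt_le, Rdiv_lt_0_compat|]; lra.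
      - right. field. lra. }
    lra.
Qed.

Fixpoint sample (g : R -> R) a d (k : nat) (t : R) : R :=
  match k with
  | O => g a
  | S k' => if Rle_dec (a + INR (S k') * d) t then g (a + INR (S k') * d)
            else sample g a d k' t
  end.

Lemma sample_mul_integrable (g f : R -> R) a b d k : a <= b -> ex_RInt f a b ->
  ex_RInt (fun t => sample g a d k t * f t) a b.
Proof.
  intros hab hf. induction k as [|k IH].
  - apply ex_RInt_Rext with (fun t => g a * f t); [reflexivity|].
    apply ex_RInt_Rscal; auto.
  - set (c := a + INR (S k) * d).
    assert (unfold_S : forall x, sample g a d (S k) x = if Rle_dec c x then g c else sample g a d k x)
      by reflexivity.
    assert (left_of_c : forall x, x < c -> sample g a d (S k) x * f x = sample g a d k x * f x).
    { intros x hx. rewrite unfold_S. destruct (Rle_dec c x); [lra|reflexivity]. }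
    assert (right_of_c : forall x, c <= x -> sample g a d (S k) x * f x = g c * f x).
    { intros x hx. rewrite unfold_S. destruct (Rle_dec c x); [reflexivity|lra]. }
    destruct (Rle_lt_dec b c) as [hbc|hcb]; [|destruct (Rle_lt_dec c a) as [hca|hac]].
    + apply ex_RInt_Rext with (fun t => sample g a d k t * f t); auto.
      intros x Hx. rewrite Rmin_left, Rmax_right in Hx by lra. symmetry; apply left_of_c; lra.
    + apply ex_RInt_Rext with (fun t => g c * f t); [|apply ex_RInt_Rscal; auto].
      intros x Hx. rewrite Rmin_left, Rmax_right in Hx by lra. symmetry; apply right_of_c; lra.
    + apply ex_RInt_Rjoin with c.
      * apply ex_RInt_Rext with (fun t => sample g a d k t * f t).
        -- intros x Hx. rewrite Rmin_left, Rmax_right in Hx by lra. symmetry; apply left_of_c; lra.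
        -- apply ex_RInt_Rsub_left with b; auto; lra.
      * apply ex_RInt_Rext with (fun t => g c * f t).
        -- intros x Hx. rewrite Rmin_left, Rmax_right in Hx by lra. symmetry; apply right_of_c; lra.
        -- apply ex_RInt_Rscal, ex_RInt_Rsub_right with a; auto; lra.
Qed.

Lemma sample_value g a d k t : 0 < d -> a <= t ->
  exists j, (j <= k)%nat /\ sample g a d k t = g (a + INR j * d) /\
    a + INR j * d <= t /\ (j = k \/ t < a + INR (S j) * d).
Proof.
  intros hd hat. induction k as [|k IH].
  - exists O. simpl. repeat split; auto; [f_equal|]; lra.
  - change (sample g a d (S k) t) with (if Rle_dec (a + INR (S k) * d) t
      then g (a + INR (S k) * d) else sample g a d k t).
    destruct (Rle_dec (a + INR (S k) * d) t) as [h|h].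
    + exists (S k). auto.
    + destruct IH as [j [hj [e [h1 h2]]]]. exists j. repeat split; auto.
      right. destruct h2 as [->|h2]; [lra|].
      apply Rlt_le_trans with (a + INR (S j) * d); auto.
      apply Rplus_le_compat_l, Rmult_le_compat_r; [lra|]. apply le_INR; lia.
Qed.

Lemma fine_grid a b del : a < b -> 0 < del ->
  exists N d, 0 < d /\ b = a + INR (S N) * d /\ d < del.
Proof.
  intros hab hdel.
  destruct (archimed ((b - a) / del)) as [hup _].
  set (N := Z.to_nat (up ((b - a) / del))).
  assert (hN : (b - a) / del < INR (S N)).
  { unfold N. rewrite S_INR, INR_IZR_INZ, Z2Nat.id; [lra|].
    apply le_IZR. apply Rlt_le. eapply Rle_lt_trans; [|exact hup].
    apply Rlt_le, Rdiv_lt_0_compat; lra. }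
  assert (hSN : 0 < INR (S N)) by (apply lt_0_INR; lia).
  exists N, ((b - a) / INR (S N)). split; [apply Rdiv_lt_0_compat; lra|split; [field; lra|]].
  apply Rmult_lt_reg_r with (INR (S N)); auto.
  replace ((b - a) / INR (S N) * INR (S N)) with (b - a) by (field; lra).
  replace (b - a) with ((b - a) / del * del) by (field; lra). nra.
Qed.

(* The product of a continuous function and a bounded integrable function is
   integrable: [g] is a uniform limit of step functions sampled from it. *)
Lemma ex_RInt_continuous_mul (g f : R -> R) a b B : a < b -> ex_RInt f a b ->
  (forall t, a <= t <= b -> Rabs (f t) <= B) ->
  (forall t, a <= t <= b -> continuity_pt g t) ->
  ex_RInt (fun t => g t * f t) a b.
Proof.
  intros hab hf hB hg.
  assert (hB0 : 0 <= B) by (eapply Rle_trans; [apply Rabs_pos|apply (hB a); lra]).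
  apply ex_RInt_uniform_limit; [lra|]. intros eta heta.
  assert (he : 0 < eta / (B + 1)) by (apply Rdiv_lt_0_compat; lra).
  destruct (Heine g _ (compact_P3 a b) hg (mkposreal _ he)) as [del Hdel].
  assert (hdel : 0 < del) by apply cond_pos.
  destruct (fine_grid a b del hab hdel) as [N [d [hd [hb_grid hdd]]]].
  exists (fun t => sample g a d N t * f t). split.
  { apply sample_mul_integrable; auto; lra. }
  intros t Ht. destruct (sample_value g a d N t hd (proj1 Ht)) as [j [hj [e [h1 h2]]]].
  rewrite e.
  replace (g t * f t - g (a + INR j * d) * f t) with ((g t - g (a + INR j * d)) * f t) by ring.
  rewrite Rabs_mult.
  assert (hjb : a + INR j * d <= b).
  { rewrite hb_grid. apply Rplus_le_compat_l, Rmult_le_compat_r; [lra|]. apply le_INR; lia. }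
  assert (ht2 : t - (a + INR j * d) <= d).
  { rewrite S_INR in *. destruct h2 as [->|h2]; lra. }
  assert (Rabs (g t - g (a + INR j * d)) < eta / (B + 1)).
  { assert (0 <= INR j * d) by (apply Rmult_le_pos; [apply pos_INR|lra]).
    apply (Hdel t); auto; [split; lra|]. rewrite Rabs_right; lra. }
  apply Rle_trans with (eta / (B + 1) * B).
  - apply Rmult_le_compat; try apply Rabs_pos; try lra. apply hB; auto.
  - apply Rle_trans with (eta / (B + 1) * (B + 1)); [apply Rmult_le_compat_l; lra|].
    right; field; lra.
Qed.

Definition impr (f : R -> R) (l : R) : Prop :=
  (forall a b, 0 < a -> a <= b -> ex_RInt f a b) /\
  (forall eps, eps > 0 -> exists del M, 0 < del <= M /\
     forall a b, 0 < a < del -> M < b -> Rabs (RInt f a b - l) < eps).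

Lemma impr_iff f l : improper_int0inf f l <-> impr f l.
Proof.
  split.
  - intros [H1 H2]. split.
    + intros a b ha hab. destruct (H1 a b ha hab) as [pr]. apply ex_RInt_Reals_1; exact pr.
    + intros eps he. destruct (H2 eps he) as [del [M [hd H]]]. exists del, M. split; auto.
      intros a b ha hb. destruct (H1 a b (proj1 ha) ltac:(lra)) as [pr].
      rewrite (RInt_Reals f a b pr). apply H; auto.
  - intros [H1 H2]. split.
    + intros a b ha hab. constructor. apply ex_RInt_Reals_0. auto.
    + intros eps he. destruct (H2 eps he) as [del [M [hd H]]]. exists del, M. split; auto.
      intros a b pr ha hb. rewrite <- (RInt_Reals f a b pr). apply H; auto.
Qed.

Lemma RInt_split3 (f : R -> R) a' a b b' :
  (forall p q, 0 < p -> p <= q -> ex_RInt f p q) -> 0 < a' <= a -> a <= b <= b' ->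
  RInt f a' b' = RInt f a' a + RInt f a b + RInt f b b'.
Proof.
  intros hi ha hb. rewrite !RInt_Rchasles; auto; apply hi; lra.
Qed.

Lemma impr_ge (f : R -> R) l a b : (forall t, 0 < t -> 0 <= f t) -> impr f l ->
  0 < a -> a <= b -> RInt f a b <= l.
Proof.
  intros hp [H1 H2] ha hab.
  apply Rnot_lt_le; intro hl.
  destruct (H2 (RInt f a b - l) ltac:(lra)) as [del [M [hd H]]].
  set (a' := Rmin (a/2) (del/2)). set (b' := Rmax (b+1) (M+1)).
  assert (ha' : 0 < a' < del /\ a' <= a).
  { unfold a', Rmin. destruct (Rle_dec (a/2) (del/2)); lra. }
  assert (hb' : M < b' /\ b <= b').
  { unfold b', Rmax. destruct (Rle_dec (b+1) (M+1)); lra. }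
  specialize (H a' b' (proj1 ha') (proj1 hb')).
  rewrite (RInt_split3 f a' a b b') in H by (auto; lra).
  assert (0 <= RInt f a' a) by (apply RInt_ge_0; [lra|apply H1; lra|intros; apply hp; lra]).
  assert (0 <= RInt f b b') by (apply RInt_ge_0; [lra|apply H1; lra|intros; apply hp; lra]).
  apply Rabs_def2 in H. lra.
Qed.

Lemma impr_nonneg (f : R -> R) l : (forall t, 0 < t -> 0 <= f t) -> impr f l -> 0 <= l.
Proof.
  intros hp h. pose proof (impr_ge _ _ 1 1 hp h ltac:(lra) ltac:(lra)) as h1.
  rewrite RInt_point in h1. exact h1.
Qed.

Lemma impr_le (f : R -> R) l K : impr f l ->
  (forall a b, 0 < a -> a <= b -> RInt f a b <= K) -> l <= K.
Proof.
  intros [H1 H2] HK. apply Rnot_lt_le; intro hl.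
  destruct (H2 (l - K) ltac:(lra)) as [del [M [hd H]]].
  specialize (H (del/2) (M+1) ltac:(lra) ltac:(lra)).
  specialize (HK (del/2) (M+1) ltac:(lra) ltac:(lra)).
  apply Rabs_def2 in H. lra.
Qed.

Lemma impr_mono (f g : R -> R) l m : impr f l -> impr g m ->
  (forall t, 0 < t -> f t <= g t) -> l <= m.
Proof.
  intros [F1 F2] [G1 G2] hfg. apply Rnot_lt_le; intro hl.
  destruct (F2 ((l - m)/2) ltac:(lra)) as [d1 [M1 [hd1 H1]]].
  destruct (G2 ((l - m)/2) ltac:(lra)) as [d2 [M2 [hd2 H2]]].
  set (a := Rmin d1 d2 / 2). set (b := Rmax M1 M2 + 1).
  assert (0 < a /\ a < d1 /\ a < d2) by (unfold a, Rmin; destruct (Rle_dec d1 d2); lra).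
  assert (M1 < b /\ M2 < b /\ a <= b) by (unfold b, Rmax; destruct (Rle_dec M1 M2); lra).
  specialize (H1 a b ltac:(lra) ltac:(lra)). specialize (H2 a b ltac:(lra) ltac:(lra)).
  assert (RInt f a b <= RInt g a b).
  { apply RInt_le; try lra; [apply F1|apply G1|intros; apply hfg]; lra. }
  apply Rabs_def2 in H1. apply Rabs_def2 in H2. lra.
Qed.

Lemma impr_plus (f g : R -> R) l m : impr f l -> impr g m ->
  impr (fun t => f t + g t) (l + m).
Proof.
  intros [F1 F2] [G1 G2]. split.
  - intros. apply ex_RInt_Rplus; auto.
  - intros eps he.
    destruct (F2 (eps/2) ltac:(lra)) as [d1 [M1 [hd1 H1]]].
    destruct (G2 (eps/2) ltac:(lra)) as [d2 [M2 [hd2 H2]]].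
    exists (Rmin d1 d2), (Rmax M1 M2).
    assert (0 < Rmin d1 d2 <= d1 /\ Rmin d1 d2 <= d2) by (unfold Rmin; destruct (Rle_dec d1 d2); lra).
    assert (M1 <= Rmax M1 M2 /\ M2 <= Rmax M1 M2) by (unfold Rmax; destruct (Rle_dec M1 M2); lra).
    split; [lra|]. intros a b ha hb.
    rewrite RInt_Rplus by (apply F1 || apply G1; lra).
    specialize (H1 a b ltac:(lra) ltac:(lra)). specialize (H2 a b ltac:(lra) ltac:(lra)).
    replace (RInt f a b + RInt g a b - (l + m)) with ((RInt f a b - l) + (RInt g a b - m)) by ring.
    eapply Rle_lt_trans; [apply Rabs_triang|lra].
Qed.

Lemma impr_scal (f : R -> R) l c : impr f l -> impr (fun t => c * f t) (c * l).
Proof.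
  intros [F1 F2]. split.
  - intros. apply ex_RInt_Rscal; auto.
  - intros eps he. pose proof (Rabs_pos c).
    destruct (F2 (eps / (Rabs c + 1))) as [d1 [M1 [hd1 H1]]].
    { apply Rdiv_lt_0_compat; lra. }
    exists d1, M1. split; auto. intros a b ha hb.
    rewrite RInt_Rscal by (apply F1; lra).
    replace (c * RInt f a b - c * l) with (c * (RInt f a b - l)) by ring.
    rewrite Rabs_mult. specialize (H1 a b ha hb).
    apply Rle_lt_trans with ((Rabs c + 1) * Rabs (RInt f a b - l)).
    + apply Rmult_le_compat_r; [apply Rabs_pos|lra].
    + replace eps with ((Rabs c + 1) * (eps / (Rabs c + 1))) by (field; lra).
      apply Rmult_lt_compat_l; lra.
Qed.

Lemma impr_ext (f g : R -> R) l : (forall t, 0 < t -> f t = g t) -> impr f l -> impr g l.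
Proof.
  intros he [F1 F2]. split.
  - intros a b ha hab. apply ex_RInt_Rext with f; auto.
    intros x hx. apply he. rewrite Rmin_left in hx by lra. lra.
  - intros eps hp. destruct (F2 eps hp) as [d [M [hd H]]]. exists d, M. split; auto.
    intros a b ha hb. rewrite <- (RInt_ext f g). apply H; auto.
    intros x hx. apply he. rewrite Rmin_left in hx by lra. lra.
Qed.

Lemma impr_abs (f g : R -> R) l m : impr f l -> impr g m ->
  (forall t, 0 < t -> Rabs (f t) <= g t) -> Rabs l <= m.
Proof.
  intros hf hg hb. apply Rabs_le. split.
  - assert (-1 * m <= l); [|lra].
    eapply impr_mono; [apply impr_scal; eauto|eauto|].
    intros t ht. specialize (hb t ht). pose proof (Rle_abs (- f t)). rewrite Rabs_Ropp in H. lra.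
  - eapply impr_mono; eauto.
    intros t ht. specialize (hb t ht). pose proof (Rle_abs (f t)). lra.
Qed.

Lemma impr_sup (f : R -> R) S : (forall t, 0 < t -> 0 <= f t) ->
  (forall a b, 0 < a -> a <= b -> ex_RInt f a b) ->
  (forall a b, 0 < a -> a <= b -> RInt f a b <= S) ->
  (forall eps, eps > 0 -> exists a b, 0 < a <= b /\ S - eps < RInt f a b) ->
  impr f S.
Proof.
  intros hp hi hS happ. split; auto.
  intros eps he. destruct (happ eps he) as [a0 [b0 [hab H]]].
  exists a0, b0. split; auto. intros a b ha hb.
  rewrite (RInt_split3 f a a0 b0 b) by (auto; lra).
  assert (0 <= RInt f a a0) by (apply RInt_ge_0; [lra|apply hi; lra|intros; apply hp; lra]).
  assert (0 <= RInt f b0 b) by (apply RInt_ge_0; [lra|apply hi; lra|intros; apply hp; lra]).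
  specialize (hS a b ltac:(lra) ltac:(lra)).
  rewrite (RInt_split3 f a a0 b0 b) in hS by (auto; lra).
  apply Rabs_def1; lra.
Qed.

Lemma impr_exists (f : R -> R) K : (forall t, 0 < t -> 0 <= f t) ->
  (forall a b, 0 < a -> a <= b -> ex_RInt f a b) ->
  (forall a b, 0 < a -> a <= b -> RInt f a b <= K) ->
  exists S, impr f S.
Proof.
  intros hp hi hK.
  set (E := fun x => exists a b, 0 < a <= b /\ x = RInt f a b).
  destruct (completeness E) as [S [HS1 HS2]].
  { exists K. intros x [a [b [h ->]]]. apply hK; lra. }
  { exists (RInt f 1 1). exists 1, 1. split; auto; lra. }
  exists S. apply impr_sup; auto.
  - intros a b ha hab. apply HS1. exists a, b. split; auto.
  - intros eps he. apply NNPP. intro hn. assert (S <= S - eps); [|lra].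
    apply HS2. intros x [a [b [h ->]]]. apply Rnot_lt_le. intro hc. apply hn.
    exists a, b. split; auto.
Qed.

Lemma impr_of_approx_below {I : Type} (f : R -> R) (g : I -> R -> R) (s : I -> R) S :
  (forall a b, 0 < a -> a <= b -> ex_RInt f a b) ->
  (forall i, impr (g i) (s i)) ->
  (forall i t, 0 < t -> 0 <= g i t <= f t) ->
  (forall i, s i <= S) ->
  (forall eps, 0 < eps -> exists i, S - eps < s i) ->
  (forall a b eps, 0 < a -> a <= b -> 0 < eps ->
     exists i, RInt f a b <= RInt (g i) a b + eps) ->
  impr f S.
Proof.
  intros hi hg hgf hsS hsup happ.
  assert (hnn : forall i t, 0 < t -> 0 <= g i t) by (intros i t ht; apply (hgf i t ht)).
  apply impr_sup; auto.
  - intros t ht. destruct (hsup 1 ltac:(lra)) as [i _]. pose proof (hgf i t ht). lra.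
  - intros a b ha hab. apply Rle_plus_epsilon. intros eps he.
    destruct (happ a b eps ha hab he) as [i hfi].
    pose proof (impr_ge _ _ a b (hnn i) (hg i) ha hab). pose proof (hsS i). lra.
  - intros eps he. destruct (hsup (eps/2) ltac:(lra)) as [i hi'].
    destruct (proj2 (hg i) (eps/2) ltac:(lra)) as [d [M [hdM HH]]].
    exists (d/2), (M+1). split; [lra|].
    specialize (HH (d/2) (M+1) ltac:(lra) ltac:(lra)). apply Rabs_def2 in HH.
    assert (RInt (g i) (d/2) (M+1) <= RInt f (d/2) (M+1)).
    { apply RInt_le; try lra; [apply (proj1 (hg i))|apply hi|intros x hx; apply hgf]; lra. }
    lra.
Qed.

Lemma exp_le x y : x <= y -> exp x <= exp y.
Proof. intros [h|h]; [left; apply exp_increasing; auto|subst; lra]. Qed.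

Lemma mvt_bound (f f' : R -> R) y B :
  (forall x, derivable_pt_lim f x (f' x)) ->
  (forall x, Rabs x <= Rabs y -> Rabs (f' x) <= B) ->
  Rabs (f y - f 0) <= Rabs y * B.
Proof.
  intros hd hB. destruct (Rtotal_order y 0) as [hy|[hy|hy]].
  - destruct (MVT_cor2 f f' y 0 hy (fun c _ => hd c)) as [c [e hc]].
    replace (f y - f 0) with (- (f 0 - f y)) by ring.
    rewrite Rabs_Ropp, e, Rabs_mult, Rmult_comm, (Rabs_left y), Rabs_right by lra.
    replace (0 - y) with (-y) by ring. apply Rmult_le_compat_l; [lra|]. apply hB.
    rewrite (Rabs_left y) by lra. unfold Rabs; destruct (Rcase_abs c); lra.
  - subst. replace (f 0 - f 0) with 0 by ring. rewrite Rabs_R0, Rmult_0_l. lra.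
  - destruct (MVT_cor2 f f' 0 y hy (fun c _ => hd c)) as [c [e hc]].
    rewrite e, Rabs_mult, Rmult_comm, (Rabs_right y), (Rabs_right (y - 0)) by lra.
    replace (y - 0) with y by ring. apply Rmult_le_compat_l; [lra|]. apply hB.
    rewrite (Rabs_right y) by lra. unfold Rabs; destruct (Rcase_abs c); lra.
Qed.

Lemma exp_m1_bound y : Rabs (exp y - 1) <= Rabs y * exp (Rabs y).
Proof.
  replace 1 with (exp 0) by apply exp_0.
  apply mvt_bound with (f' := exp); [intros; apply derivable_pt_lim_exp|].
  intros x hx. rewrite Rabs_right by (left; apply exp_pos). apply exp_le.
  apply Rle_trans with (Rabs x); [apply Rle_abs|auto].
Qed.

Lemma exp_taylor2_bound y : Rabs (exp y - 1 - y) <= y ^ 2 * exp (Rabs y).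
Proof.
  pose (f := fun x => exp x - x).
  assert (H : Rabs (f y - f 0) <= Rabs y * (Rabs y * exp (Rabs y))).
  { apply mvt_bound with (fun x => exp x - 1).
    - intros x. unfold f. apply derivable_pt_lim_minus;
        [apply derivable_pt_lim_exp|apply derivable_pt_lim_id].
    - intros x hx. eapply Rle_trans; [apply exp_m1_bound|].
      apply Rmult_le_compat; auto using Rabs_pos; [left; apply exp_pos|apply exp_le; auto]. }
  unfold f in H. rewrite exp_0 in H. replace (exp y - 1 - y) with (exp y - y - (1 - 0)) by ring.
  replace (y ^ 2 * exp (Rabs y)) with (Rabs y * (Rabs y * exp (Rabs y))); auto.
  rewrite <- Rmult_assoc, <- Rabs_mult, Rabs_right by nra. ring.
Qed.

Lemma sinh_ge u : 0 <= u -> 2 * u <= exp u - exp (- u).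
Proof.
  intros hu. pose proof (exp_ge_taylor u 2 hu) as ht. simpl in ht.
  rewrite exp_Ropp. set (A := exp u) in *.
  set (s := 1 + u + u ^ 2 / 2).
  assert (hA : s <= A).
  { replace s with (1 / 1 + u * 1 / 1 + u * (u * 1) / (1 + 1)) by (unfold s; field). lra. }
  assert (hs : 1 <= s) by (unfold s; nra).
  assert (/ A <= / s) by (apply Rinv_le_contravar; lra).
  assert (s - / s - 2 * u = (u^2/2)^2 / s) by (unfold s; field; nra).
  assert (0 <= (u^2/2)^2 / s) by (apply Rdiv_le_0_compat; nra).
  lra.
Qed.

Lemma cosh_sq x : exp x + exp (- x) - 2 = (exp (x/2) - exp (-(x/2))) ^ 2.
Proof.
  replace x with (x/2 + x/2) at 1 by field. replace (-x) with (-(x/2) + -(x/2)) by field.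
  rewrite !exp_plus.
  assert (exp (x/2) * exp (-(x/2)) = 1).
  { rewrite <- exp_plus. replace (x/2 + -(x/2)) with 0 by ring. apply exp_0. }
  nra.
Qed.

Lemma cosh2_lower x : x ^ 2 <= exp x + exp (- x) - 2.
Proof.
  rewrite cosh_sq. destruct (Rle_lt_dec 0 x).
  - pose proof (sinh_ge (x/2) ltac:(lra)). nra.
  - pose proof (sinh_ge (-(x/2)) ltac:(lra)). rewrite Ropp_involutive in H. nra.
Qed.

Lemma cosh2_upper x : exp x + exp (- x) - 2 <= x ^ 2 * exp (Rabs x).
Proof.
  rewrite cosh_sq.
  pose (f := fun u => exp u - exp (- u)).
  assert (H : Rabs (f (x/2) - f 0) <= Rabs (x/2) * (2 * exp (Rabs (x/2)))).
  { apply mvt_bound with (fun u => exp u + exp (- u)).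
    - intros u. unfold f. replace (exp u + exp (-u)) with (exp u - (exp (-u) * -1)) by ring.
      apply derivable_pt_lim_minus; [apply derivable_pt_lim_exp|].
      apply (derivable_pt_lim_comp Ropp exp);
        [apply derivable_pt_lim_opp, derivable_pt_lim_id|apply derivable_pt_lim_exp].
    - intros u hu. rewrite Rabs_right by (apply Rle_ge, Rplus_le_le_0_compat; left; apply exp_pos).
      assert (exp u <= exp (Rabs (x/2))) by (apply exp_le; eapply Rle_trans; [apply Rle_abs|auto]).
      assert (exp (-u) <= exp (Rabs (x/2))).
      { apply exp_le. eapply Rle_trans; [|exact hu]. rewrite <- Rabs_Ropp. apply Rle_abs. }
      lra. }
  unfold f in H. rewrite Ropp_0, exp_0, Rminus_diag, Rminus_0_r in H.
  assert (hq : (exp (x/2) - exp (-(x/2))) ^ 2 <= (Rabs (x/2) * (2 * exp (Rabs (x/2)))) ^ 2).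
  { rewrite <- (pow2_abs (exp (x/2) - exp (-(x/2)))). apply pow_incr. split; auto. apply Rabs_pos. }
  eapply Rle_trans; [exact hq|].
  assert (ea : exp (Rabs (x/2)) ^ 2 = exp (Rabs x)).
  { simpl. rewrite Rmult_1_r, <- exp_plus. f_equal.
    unfold Rdiv. rewrite Rabs_mult, Rabs_inv, (Rabs_right 2) by lra. field. }
  assert (eb : Rabs (x/2) ^ 2 = x ^ 2 / 4).
  { rewrite <- Rsqr_pow2, <- Rsqr_abs, Rsqr_pow2. field. }
  replace ((Rabs (x / 2) * (2 * exp (Rabs (x / 2)))) ^ 2)
    with (4 * (Rabs (x/2) ^ 2) * (exp (Rabs (x/2)) ^ 2)) by ring.
  rewrite ea, eb. right; field.
Qed.

Lemma second_difference_mvt (F F1 : R -> R) y L h r : 0 < h < r ->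
  (forall x, Rabs (x - y) < r -> derivable_pt_lim F x (F1 x)) ->
  exists c, 0 < c < h /\
    F (y + h) + F (y - h) - 2 * F y - L * h ^ 2 = (F1 (y + c) - F1 (y - c) - 2 * L * c) * h.
Proof.
  intros hh hF.
  pose (q := fun s => F (y + s) + F (y - s) - 2 * F y - L * s ^ 2).
  pose (q' := fun s => F1 (y + s) - F1 (y - s) - 2 * L * s).
  assert (hq : forall c, 0 <= c <= h -> derivable_pt_lim q c (q' c)).
  { intros c hc. unfold q, q'.
    replace (F1 (y + c) - F1 (y - c) - 2 * L * c) with
      (F1 (y + c) * 1 + F1 (y - c) * (-1) - 0 - L * (INR 2 * c ^ (2 - 1))) by (simpl; ring).
    repeat apply derivable_pt_lim_minus; [apply derivable_pt_lim_plus| |].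
    - apply (derivable_pt_lim_comp (fun s => y + s) F).
      + replace 1 with (0 + 1) by ring.
        apply derivable_pt_lim_plus; [apply derivable_pt_lim_const|apply derivable_pt_lim_id].
      + apply hF. replace (y + c - y) with c by ring. rewrite Rabs_right; lra.
    - apply (derivable_pt_lim_comp (fun s => y - s) F).
      + replace (-1) with (0 - 1) by ring.
        apply derivable_pt_lim_minus; [apply derivable_pt_lim_const|apply derivable_pt_lim_id].
      + apply hF. replace (y - c - y) with (- c) by ring. rewrite Rabs_Ropp, Rabs_right; lra.
    - apply derivable_pt_lim_const.
    - apply derivable_pt_lim_scal, derivable_pt_lim_pow. }
  destruct (MVT_cor2 q q' 0 h ltac:(lra) hq) as [c [e hc]].
  exists c. split; [auto|]. unfold q, q' in *.
  rewrite Rplus_0_r, Rminus_0_r, !Rminus_0_r in e. rewrite <- e. ring.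
Qed.

Lemma second_difference_limit (F F1 : R -> R) y L r : 0 < r ->
  (forall x, Rabs (x - y) < r -> derivable_pt_lim F x (F1 x)) ->
  derivable_pt_lim F1 y L ->
  forall eps, 0 < eps -> exists h0, 0 < h0 /\ forall h, 0 < h < h0 ->
    Rabs ((F (y + h) + F (y - h) - 2 * F y) / h ^ 2 - L) <= eps.
Proof.
  intros hr hF hF1 eps he.
  destruct (hF1 (eps/2) ltac:(lra)) as [del hdel].
  assert (hdel0 : 0 < del) by apply cond_pos.
  exists (Rmin del r). split; [apply Rmin_glb_lt; lra|].
  intros h [h0 hh].
  assert (hhd : h < del /\ h < r) by (unfold Rmin in hh; destruct (Rle_dec del r); lra).
  destruct (second_difference_mvt F F1 y L h r ltac:(lra) hF) as [c [hc e]].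
  assert (hqc : Rabs (F1 (y + c) - F1 (y - c) - 2 * L * c) <= eps * c).
  { assert (k1 : Rabs ((F1 (y + c) - F1 y) / c - L) < eps / 2).
    { apply hdel; [lra|]. rewrite Rabs_right; lra. }
    assert (k2 : Rabs ((F1 (y + - c) - F1 y) / - c - L) < eps / 2).
    { apply hdel; [lra|]. rewrite Rabs_Ropp, Rabs_right; lra. }
    replace (F1 (y + c) - F1 (y - c) - 2 * L * c) with
      (c * ((F1 (y + c) - F1 y) / c - L) + c * ((F1 (y + - c) - F1 y) / - c - L)).
    2:{ replace (y + - c) with (y - c) by ring. field. lra. }
    eapply Rle_trans; [apply Rabs_triang|]. rewrite !Rabs_mult, Rabs_right by lra. nra. }
  replace ((F (y + h) + F (y - h) - 2 * F y) / h ^ 2 - L)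
    with ((F1 (y + c) - F1 (y - c) - 2 * L * c) * h / h ^ 2).
  2:{ rewrite <- e. field. lra. }
  unfold Rdiv. rewrite !Rabs_mult, Rabs_inv, (Rabs_right h), (Rabs_right (h^2)) by nra.
  assert (hi : 0 < / h ^ 2) by (apply Rinv_0_lt_compat; nra).
  apply Rle_trans with (eps * h * h * / h ^ 2); [|right; field; lra].
  apply Rmult_le_compat_r; [lra|]. apply Rmult_le_compat_r; [lra|].
  apply Rle_trans with (eps * c); [auto|]. apply Rmult_le_compat_l; lra.
Qed.

Lemma derivable_of_quadratic_remainder (F : R -> R) G lam K r : 0 < r ->
  (forall h, h <> 0 -> Rabs h < r -> Rabs (F (lam + h) - F lam - h * G) <= h ^ 2 * K) ->
  derivable_pt_lim F lam G.
Proof.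
  intros hr hb eps he.
  assert (hK : 0 <= K).
  { specialize (hb (r/2) ltac:(lra) ltac:(rewrite Rabs_right; lra)).
    pose proof (Rabs_pos (F (lam + r / 2) - F lam - r / 2 * G)).
    assert (0 < (r/2)^2) by (apply pow_lt; lra). nra. }
  assert (hd : 0 < Rmin r (eps / (K + 1))).
  { apply Rmin_glb_lt; auto. apply Rdiv_lt_0_compat; lra. }
  exists (mkposreal _ hd). intros h hh0 hh. simpl in hh.
  assert (h1 : Rabs h < r) by (eapply Rlt_le_trans; [exact hh|apply Rmin_l]).
  assert (h2 : Rabs h < eps / (K+1)) by (eapply Rlt_le_trans; [exact hh|apply Rmin_r]).
  specialize (hb h hh0 h1).
  replace ((F (lam + h) - F lam) / h - G) with ((F (lam + h) - F lam - h * G) / h) by (field; auto).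
  unfold Rdiv. rewrite Rabs_mult, Rabs_inv.
  assert (0 < Rabs h) by (apply Rabs_pos_lt; auto).
  apply Rle_lt_trans with (h ^ 2 * K * / Rabs h).
  { apply Rmult_le_compat_r; auto. left; apply Rinv_0_lt_compat; auto. }
  replace (h ^ 2 * K * / Rabs h) with (Rabs h * K).
  2:{ rewrite <- Rsqr_pow2, Rsqr_abs. unfold Rsqr. field. lra. }
  apply Rle_lt_trans with (Rabs h * (K + 1)); [apply Rmult_le_compat_l; lra|].
  apply Rlt_le_trans with (eps / (K + 1) * (K + 1)); [apply Rmult_lt_compat_r; lra|].
  right; field; lra.
Qed.

Lemma derivable_pt_lim_local (f g : R -> R) x l r : 0 < r -> derivable_pt_lim f x l ->
  (forall y, Rabs (y - x) < r -> f y = g y) -> derivable_pt_lim g x l.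
Proof.
  intros hr hf he. apply is_derive_Reals. apply is_derive_Reals in hf.
  apply (is_derive_ext_loc f g); auto. exists (mkposreal r hr). intros y hy. apply he, hy.
Qed.

Lemma lim_right0_unique g L1 L2 : lim_right0 g L1 -> lim_right0 g L2 -> L1 = L2.
Proof.
  intros h1 h2. apply NNPP. intro hn.
  assert (he : 0 < Rabs (L1 - L2) / 2) by (apply Rdiv_lt_0_compat; [apply Rabs_pos_lt; lra|lra]).
  destruct (h1 _ he) as [d1 [hd1 H1]]. destruct (h2 _ he) as [d2 [hd2 H2]].
  set (x := Rmin d1 d2 / 2).
  assert (0 < x < d1 /\ x < d2) by (unfold x, Rmin; destruct (Rle_dec d1 d2); lra).
  specialize (H1 x ltac:(lra)). specialize (H2 x ltac:(lra)).
  assert (Rabs (L1 - L2) <= Rabs (g x - L2) + Rabs (g x - L1)).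
  { replace (L1 - L2) with ((g x - L2) - (g x - L1)) by ring.
    eapply Rle_trans; [apply Rabs_triang|]. rewrite Rabs_Ropp. lra. }
  lra.
Qed.

Lemma lim_right0_affine (f g : R -> R) L c d : lim_right0 f L ->
  (forall x, 0 < x -> g x = c * (f x - d)) -> lim_right0 g (c * (L - d)).
Proof.
  intros hf hg eps he. pose proof (Rabs_pos c) as hc.
  destruct (hf (eps / (Rabs c + 1))) as [del [hd H]]; [apply Rdiv_lt_0_compat; lra|].
  exists del. split; auto. intros x hx. rewrite hg by lra.
  replace (c * (f x - d) - c * (L - d)) with (c * (f x - L)) by ring.
  rewrite Rabs_mult. specialize (H x hx).
  apply Rle_lt_trans with ((Rabs c + 1) * Rabs (f x - L)).
  - apply Rmult_le_compat_r; [apply Rabs_pos|lra].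
  - replace eps with ((Rabs c + 1) * (eps / (Rabs c + 1))) by (field; lra).
    apply Rmult_lt_compat_l; lra.
Qed.

Lemma m1_pow_sq n : (-1) ^ n * (-1) ^ n = 1.
Proof. rewrite <- Rpow_mult_distr. replace (-1 * -1) with 1 by ring. apply pow1. Qed.

Lemma series_at0 (c : nat -> R) P :
  infinite_sum (fun n => c n / INR (fact n) * 0 ^ n) P -> P = c 0%nat.
Proof.
  intros h. apply (uniqueness_sum (fun n => c n / INR (fact n) * 0 ^ n)); auto.
  intros eps he. exists 0%nat. intros n hn. unfold R_dist.
  replace (sum_f_R0 (fun n => c n / INR (fact n) * 0 ^ n) n) with (c 0%nat).
  - rewrite Rminus_diag, Rabs_R0; lra.
  - induction n; simpl; [field|]. rewrite <- IHn by lia. ring.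
Qed.

Definition exp_partial (M : nat) (x : R) : R := sum_f_R0 (fun i => / INR (fact i) * x ^ i) M.

Lemma exp_partial_S M x :
  exp_partial (S M) x = exp_partial M x + / INR (fact (S M)) * x ^ (S M).
Proof. reflexivity. Qed.

Lemma exp_partial_cv x : Un_cv (fun M => exp_partial M x) (exp x).
Proof.
  unfold exp_partial, exp. destruct (exist_exp x) as [l hl]. simpl.
  intros eps he. destruct (hl eps he) as [N hN]. exists N. intros n hn. apply hN; auto.
Qed.

Lemma exp_partial_le_exp x M : 0 <= x -> exp_partial M x <= exp x.
Proof.
  intros hx. eapply Rle_trans; [|apply (exp_ge_taylor x M hx)].
  right. apply sum_eq. intros i _. unfold Rdiv. ring.
Qed.

Lemma exp_partial_ge1 M x : 0 <= x -> 1 <= exp_partial M x.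
Proof.
  intros hx. induction M; [unfold exp_partial; simpl; lra|].
  rewrite exp_partial_S. assert (0 <= / INR (fact (S M)) * x ^ S M); [|lra].
  apply Rmult_le_pos; [left; apply Rinv_0_lt_compat, INR_fact_lt_0|apply pow_le; auto].
Qed.

Lemma exp_partial_continuous M r t : continuity_pt (fun t => exp_partial M (r * t)) t.
Proof.
  induction M; [unfold exp_partial; simpl; reg|].
  apply continuity_pt_ext with (fun t => exp_partial M (r * t) + / INR (fact (S M)) * (r * t) ^ S M).
  { intros; rewrite exp_partial_S; auto. }
  apply continuity_pt_plus; auto. reg.
Qed.

Lemma exp_remainder_mono x X M : 0 <= x <= X ->
  exp x - exp_partial M x <= exp X - exp_partial M X.
Proof.
  intros hx.
  assert (tail_le : forall K, exp_partial (K + M) x - exp_partial M x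
                              <= exp_partial (K + M) X - exp_partial M X).
  { induction K; [simpl; lra|].
    replace (S K + M)%nat with (S (K + M)) by lia. rewrite !exp_partial_S.
    assert (/ INR (fact (S (K + M))) * x ^ S (K + M) <= / INR (fact (S (K + M))) * X ^ S (K + M));
      [|lra].
    apply Rmult_le_compat_l; [left; apply Rinv_0_lt_compat, INR_fact_lt_0|apply pow_incr; lra]. }
  assert (tail_cv : forall y, Un_cv (fun K => exp_partial (K + M) y - exp_partial M y)
                                    (exp y - exp_partial M y)).
  { intros y eps he. destruct (exp_partial_cv y eps he) as [N hN]. exists N. intros n hn.
    unfold R_dist. replace (exp_partial (n + M) y - exp_partial M y - (exp y - exp_partial M y))
      with (exp_partial (n + M) y - exp y) by ring.
    apply hN. lia. }
  exact (Rle_cv_lim tail_le (tail_cv x) (tail_cv X)).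
Qed.

(* For [k >= 1]: [t^k e^{-λt} <= C_k(λ) min(1,t)], so Lévy integrability of
   [μ] controls all Laplace moments. *)
Lemma pow_exp_le_min k lam t : (1 <= k)%nat -> 0 < lam -> 0 < t ->
  t ^ k * exp (- (lam * t)) <= (1 + INR (fact k) / lam ^ k) * Rmin 1 t.
Proof.
  intros hk hl ht.
  assert (hf : 0 <= INR (fact k) / lam ^ k)
    by (apply Rdiv_le_0_compat; [apply pos_INR|apply pow_lt; auto]).
  assert (hk0 : 0 <= t ^ k) by (apply pow_le; lra).
  destruct (Rle_dec t 1) as [h1|h1].
  - rewrite Rmin_right by lra.
    assert (t ^ k <= t).
    { destruct k; [lia|]. change (t ^ S k) with (t * t ^ k).
      assert (t ^ k <= 1) by (rewrite <- (pow1 k); apply pow_incr; lra).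
      assert (0 <= t ^ k) by (apply pow_le; lra). nra. }
    assert (exp (- (lam * t)) <= 1) by (rewrite <- exp_0; apply exp_le; nra).
    nra.
  - rewrite Rmin_left by lra.
    assert (hL : (lam * t) ^ k / INR (fact k) <= exp (lam * t)).
    { eapply Rle_trans; [|apply (exp_ge_taylor (lam * t) k ltac:(nra))].
      destruct k; [lia|]. rewrite tech5.
      assert (0 <= sum_f_R0 (fun i => (lam * t) ^ i / INR (fact i)) k); [|lra].
      apply cond_pos_sum. intros i. apply Rdiv_le_0_compat; [apply pow_le; nra|apply INR_fact_lt_0]. }
    rewrite exp_Ropp. assert (hfk := INR_fact_lt_0 k).
    rewrite Rpow_mult_distr in hL.
    assert (0 < lam ^ k) by (apply pow_lt; auto). assert (0 < t ^ k) by (apply pow_lt; auto).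
    assert (t ^ k * / exp (lam * t) <= INR (fact k) / lam ^ k); [|lra].
    apply Rle_trans with (t ^ k * / (lam ^ k * t ^ k / INR (fact k))).
    + apply Rmult_le_compat_l; [lra|]. apply Rinv_le_contravar; auto.
      apply Rdiv_lt_0_compat; nra.
    + right. field. lra.
Qed.

Lemma pow_exp_remainder k lam h t : 0 < lam -> Rabs h <= lam / 2 -> 0 < t ->
  Rabs (t ^ k * exp (- ((lam + h) * t)) - t ^ k * exp (- (lam * t))
        + h * (t ^ (S k) * exp (- (lam * t))))
  <= h ^ 2 * (t ^ (S (S k)) * exp (- (lam / 2 * t))).
Proof.
  intros hl hh ht.
  replace (t ^ k * exp (- ((lam + h) * t)) - t ^ k * exp (- (lam * t))
           + h * (t ^ (S k) * exp (- (lam * t))))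
    with (t ^ k * exp (- (lam * t)) * (exp (- h * t) - 1 - (- h * t))).
  2:{ replace (- ((lam + h) * t)) with (- (lam * t) + - h * t) by ring. rewrite exp_plus. simpl. ring. }
  rewrite !Rabs_mult, (Rabs_right (t ^ k)), (Rabs_right (exp _))
    by (try (left; apply exp_pos); apply Rle_ge, pow_le; lra).
  assert (hk : 0 <= t ^ k) by (apply pow_le; lra).
  apply Rle_trans with (t ^ k * exp (- (lam * t)) * ((- h * t) ^ 2 * exp (Rabs (- h * t)))).
  { apply Rmult_le_compat_l; [apply Rmult_le_pos; auto; left; apply exp_pos|].
    apply exp_taylor2_bound. }
  assert (ea : exp (- (lam * t)) * exp (Rabs (- h * t)) <= exp (- (lam / 2 * t))).
  { rewrite <- exp_plus. apply exp_le. rewrite Rabs_mult, Rabs_Ropp, (Rabs_right t) by lra.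
    assert (Rabs h * t <= lam / 2 * t) by (apply Rmult_le_compat_r; lra). lra. }
  replace (t ^ k * exp (- (lam * t)) * ((- h * t) ^ 2 * exp (Rabs (- h * t))))
    with (h ^ 2 * t ^ (S (S k)) * (exp (- (lam * t)) * exp (Rabs (- h * t)))) by (simpl; ring).
  rewrite Rmult_assoc. apply Rmult_le_compat_l; [nra|].
  apply Rmult_le_compat_l; [apply pow_le; lra|auto].
Qed.

(* The kernel of the second symmetric difference of [y |-> 1 - e^{-yt}]. *)
Definition sd_kernel (y h t : R) : R :=
  exp (- ((y + h) * t)) + exp (- ((y - h) * t)) - 2 * exp (- (y * t)).

Lemma sd_kernel_cosh y h t :
  sd_kernel y h t = exp (- (y * t)) * (exp (h * t) + exp (- (h * t)) - 2).
Proof.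
  unfold sd_kernel. replace (- ((y + h) * t)) with (- (y * t) + - (h * t)) by ring.
  replace (- ((y - h) * t)) with (- (y * t) + h * t) by ring. rewrite !exp_plus. ring.
Qed.

Lemma sd_kernel_lower y h t : 0 < h ->
  t ^ 2 * exp (- (y * t)) <= / h ^ 2 * sd_kernel y h t.
Proof.
  intros hh. rewrite sd_kernel_cosh.
  pose proof (cosh2_lower (h * t)). pose proof (exp_pos (- (y * t))).
  assert (0 < h ^ 2) by (apply pow_lt; lra).
  replace (/ h ^ 2 * (exp (- (y * t)) * (exp (h * t) + exp (- (h * t)) - 2)))
    with (exp (- (y * t)) * ((exp (h * t) + exp (- (h * t)) - 2) / h ^ 2)) by (field; lra).
  rewrite (Rmult_comm (t ^ 2)). apply Rmult_le_compat_l; [lra|].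
  apply (Rmult_le_reg_r (h ^ 2)); auto. unfold Rdiv. rewrite Rmult_assoc, Rinv_l by lra.
  replace ((h * t) ^ 2) with (t ^ 2 * h ^ 2) in H by ring. lra.
Qed.

Lemma sd_kernel_upper y h t : 0 < h -> 0 < t ->
  / h ^ 2 * sd_kernel y h t <= t ^ 2 * exp (- ((y - h) * t)).
Proof.
  intros hh ht. rewrite sd_kernel_cosh.
  pose proof (cosh2_upper (h * t)). pose proof (exp_pos (- (y * t))).
  rewrite (Rabs_right (h * t)) in H by nra.
  assert (0 < h ^ 2) by (apply pow_lt; lra).
  replace (/ h ^ 2 * (exp (- (y * t)) * (exp (h * t) + exp (- (h * t)) - 2)))
    with (exp (- (y * t)) * ((exp (h * t) + exp (- (h * t)) - 2) / h ^ 2)) by (field; lra).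
  replace (t ^ 2 * exp (- ((y - h) * t))) with (exp (- (y * t)) * (t ^ 2 * exp (h * t))).
  2:{ replace (- ((y - h) * t)) with (- (y * t) + h * t) by ring. rewrite exp_plus. ring. }
  apply Rmult_le_compat_l; [lra|].
  apply (Rmult_le_reg_r (h ^ 2)); auto. unfold Rdiv. rewrite Rmult_assoc, Rinv_l by lra.
  replace ((h * t) ^ 2 * exp (h * t)) with (t ^ 2 * exp (h * t) * h ^ 2) in H by ring. lra.
Qed.

Lemma RInt_t2_exp_le c u B : 0 < c -> 0 < u -> u <= B ->
  RInt (fun t => t ^ 2 * exp (- (c * t))) u B <= u ^ 2 / c + 2 * u / c ^ 2 + 2 / c ^ 3.
Proof.
  intros hc hu hB.
  set (P := fun t => t ^ 2 / c + 2 * t / c ^ 2 + 2 / c ^ 3).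
  set (F := fun t => - exp (- (c * t)) * P t).
  assert (hI : is_RInt (fun t => t ^ 2 * exp (- (c * t))) u B (minus (F B) (F u))).
  { apply (is_RInt_derive F).
    - intros x _. unfold F, P. auto_derive; auto. field. lra.
    - intros x _. apply continuity_pt_filterlim. reg. }
  rewrite (is_RInt_unique _ _ _ _ hI). change (minus (F B) (F u)) with (F B - F u). unfold F.
  assert (hP : forall t, 0 <= t -> 0 <= P t).
  { intros t ht. unfold P. assert (0 < c ^ 2) by (apply pow_lt; lra).
    assert (0 < c ^ 3) by (apply pow_lt; lra).
    assert (0 <= t ^ 2 / c) by (apply Rdiv_le_0_compat; nra).
    assert (0 <= 2 * t / c ^ 2) by (apply Rdiv_le_0_compat; nra).
    assert (0 <= 2 / c ^ 3) by (apply Rdiv_le_0_compat; nra). lra. }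
  pose proof (hP B ltac:(lra)). pose proof (hP u ltac:(lra)).
  pose proof (exp_pos (- (c * B))).
  assert (exp (- (c * u)) <= 1) by (rewrite <- exp_0; apply exp_le; nra).
  fold (P u). nra.
Qed.

Lemma shifted_poly_le lam h u : 0 < lam -> 0 < h <= lam / 2 -> 0 <= u ->
  u ^ 2 / (lam - h) + 2 * u / (lam - h) ^ 2 + 2 / (lam - h) ^ 3 <=
  2 * u ^ 2 / lam + 8 * u / lam ^ 2 + 16 / lam ^ 3.
Proof.
  intros hl hh hu. set (c := lam - h).
  assert (hc : lam / 2 <= c) by (unfold c; lra).
  assert (i1 : / c <= 2 / lam).
  { replace (2 / lam) with (/ (lam / 2)) by (field; lra). apply Rinv_le_contravar; lra. }
  assert (0 <= / c) by (left; apply Rinv_0_lt_compat; lra).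
  assert (i2 : / c ^ 2 <= 4 / lam ^ 2).
  { replace (/ c ^ 2) with ((/ c) ^ 2) by (field; lra).
    replace (4 / lam ^ 2) with ((2 / lam) ^ 2) by (field; lra). apply pow_incr; lra. }
  assert (i3 : / c ^ 3 <= 8 / lam ^ 3).
  { replace (/ c ^ 3) with ((/ c) ^ 3) by (field; lra).
    replace (8 / lam ^ 3) with ((2 / lam) ^ 3) by (field; lra). apply pow_incr; lra. }
  assert (0 <= u ^ 2) by (apply pow_le; lra).
  unfold Rdiv in *. nra.
Qed.

Lemma decay_point theta gamma : 0 < theta -> 0 < gamma ->
  exists x, 2 < x /\ theta * Rpower x (- gamma) <= / 18.
Proof.
  intros hth hg. set (x := 2 + exp (ln (18 * theta) / gamma)).
  pose proof (exp_pos (ln (18 * theta) / gamma)).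
  exists x. split; [unfold x; lra|].
  assert (hlx : ln (18 * theta) < gamma * ln x).
  { replace (ln (18 * theta)) with (gamma * ln (exp (ln (18 * theta) / gamma)))
      by (rewrite ln_exp; field; lra).
    apply Rmult_lt_compat_l; auto. apply ln_increasing; [auto|unfold x; lra]. }
  unfold Rpower. apply Rle_trans with (theta * exp (- ln (18 * theta))).
  - apply Rmult_le_compat_l; [lra|]. apply exp_le. lra.
  - rewrite exp_Ropp, exp_ln by lra. right; field; lra.
Qed.

Lemma Rpower_neg_le1 x gamma : 1 <= x -> 0 <= gamma -> Rpower x (- gamma) <= 1.
Proof.
  intros hx hg. unfold Rpower. rewrite <- exp_0. apply exp_le.
  assert (0 <= ln x) by (rewrite <- ln_1; apply ln_le; lra).
  nra.
Qed.

Lemma window_parameter (delta L1 t : R) (L2 : option R) : 0 < delta -> 0 <= L1 ->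
  lt_ext L1 L2 ->
  (match L2 with Some l2 => delta / l2 < t | None => 0 < t end) ->
  (L1 = 0 \/ t < delta / L1) ->
  0 < t /\ L1 < delta / t /\ lt_ext (delta / t) L2.
Proof.
  intros hd hL1 hL12 ht1 ht2.
  assert (ht : 0 < t).
  { destruct L2 as [l2|]; auto. simpl in hL12.
    assert (0 < delta / l2) by (apply Rdiv_lt_0_compat; lra). lra. }
  split; [auto|split].
  - destruct ht2 as [->|ht2]; [apply Rdiv_lt_0_compat; auto|].
    destruct (Req_dec L1 0) as [->|hne]; [apply Rdiv_lt_0_compat; auto|].
    apply (Rmult_lt_reg_r t); auto. unfold Rdiv. rewrite Rmult_assoc, Rinv_l, Rmult_1_r by lra.
    apply (Rmult_lt_reg_r (/ L1)); [apply Rinv_0_lt_compat; lra|].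
    replace (L1 * t * / L1) with t by (field; lra). exact ht2.
  - destruct L2 as [l2|]; simpl; auto. simpl in hL12.
    apply (Rmult_lt_reg_r t); auto. unfold Rdiv. rewrite Rmult_assoc, Rinv_l, Rmult_1_r by lra.
    apply (Rmult_lt_reg_r (/ l2)); [apply Rinv_0_lt_compat; lra|].
    replace (l2 * t * / l2) with t by (field; lra). exact ht1.
Qed.

Lemma Rmin_1_continuous_inv t : 0 < t -> continuity_pt (fun s => / Rmin 1 s) t.
Proof.
  intros ht. assert (e : forall s, Rmin 1 s = (1 + s - Rabs (1 - s)) / 2).
  { intros s. unfold Rmin, Rabs. destruct (Rle_dec 1 s), (Rcase_abs (1 - s)); lra. }
  apply continuity_pt_ext with (fun s => / ((1 + s - Rabs (1 - s)) / 2)); [intros; rewrite e; auto|].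
  apply continuity_pt_inv; [reg|].
  rewrite <- e. unfold Rmin; destruct (Rle_dec 1 t); lra.
Qed.

Section LevyDensity.

Variables (mu : R -> R) (beta l0 : R).
Hypothesis mu_pos : forall t, 0 < t -> 0 < mu t.
Hypothesis nu_nonincreasing :
  forall s t, 0 < s -> s <= t -> exp (beta * t) * mu t <= exp (beta * s) * mu s.
Hypothesis mu_levy : impr (fun t => Rmin 1 t * mu t) l0.

(* Monotonicity of [ν] makes [μ] locally bounded on [(0,∞)]. *)
Lemma mu_local_bound a b t : 0 < a -> a <= t <= b ->
  mu t <= exp (beta * a) * mu a * (exp (- beta * a) + exp (- beta * b)).
Proof.
  intros ha ht. pose proof (mu_pos t ltac:(lra)). pose proof (exp_pos (beta * t)).
  assert (e : mu t = exp (- beta * t) * (exp (beta * t) * mu t)).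
  { rewrite <- Rmult_assoc, <- exp_plus. replace (- beta * t + beta * t) with 0 by ring.
    rewrite exp_0; ring. }
  assert (hexp : exp (- beta * t) <= exp (- beta * a) + exp (- beta * b)).
  { pose proof (exp_pos (- beta * a)). pose proof (exp_pos (- beta * b)).
    destruct (Rle_lt_dec 0 beta).
    - assert (exp (- beta * t) <= exp (- beta * a)) by (apply exp_le; nra). lra.
    - assert (exp (- beta * t) <= exp (- beta * b)) by (apply exp_le; nra). lra. }
  rewrite e, (Rmult_comm (exp (beta * a) * mu a)).
  pose proof (nu_nonincreasing a t ha (proj1 ht)). pose proof (exp_pos (- beta * t)).
  apply Rmult_le_compat; try lra. apply Rmult_le_pos; lra.
Qed.

Lemma mu_integrable a b : 0 < a -> a <= b -> ex_RInt mu a b.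
Proof.
  intros ha [hab|<-]; [|apply ex_RInt_point].
  apply ex_RInt_Rext with (fun t => / Rmin 1 t * (Rmin 1 t * mu t)).
  { intros x hx. rewrite Rmin_left in hx by lra. field.
    unfold Rmin; destruct (Rle_dec 1 x); lra. }
  apply ex_RInt_continuous_mul
    with (exp (beta * a) * mu a * (exp (- beta * a) + exp (- beta * b))); auto.
  - apply mu_levy; lra.
  - intros t ht. pose proof (mu_pos t ltac:(lra)).
    assert (0 < Rmin 1 t <= 1) by (unfold Rmin; destruct (Rle_dec 1 t); lra).
    rewrite Rabs_right by nra. eapply Rle_trans; [|apply (mu_local_bound a b t); auto]. nra.
  - intros t ht. apply Rmin_1_continuous_inv. lra.
Qed.

Lemma mul_mu_integrable (g : R -> R) : (forall t, 0 < t -> continuity_pt g t) ->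
  forall a b, 0 < a -> a <= b -> ex_RInt (fun t => g t * mu t) a b.
Proof.
  intros hg a b ha [hab|<-]; [|apply ex_RInt_point].
  apply ex_RInt_continuous_mul
    with (exp (beta * a) * mu a * (exp (- beta * a) + exp (- beta * b))); auto.
  - apply mu_integrable; lra.
  - intros t ht. rewrite Rabs_right by (apply Rle_ge, Rlt_le, mu_pos; lra).
    apply mu_local_bound; auto.
  - intros t ht. apply hg. lra.
Qed.

Definition laplace_moment (k : nat) (lam : R) : R :=
  epsilon (inhabits 0) (impr (fun t => t ^ k * exp (- (lam * t)) * mu t)).

Lemma laplace_integrand_nonneg k lam t : 0 < t -> 0 <= t ^ k * exp (- (lam * t)) * mu t.
Proof.
  intros ht. pose proof (mu_pos t ht). pose proof (exp_pos (- (lam * t))).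
  pose proof (pow_le t k ltac:(lra)). apply Rmult_le_pos; [apply Rmult_le_pos|]; lra.
Qed.

Lemma laplace_moment_spec k lam : (1 <= k)%nat -> 0 < lam ->
  impr (fun t => t ^ k * exp (- (lam * t)) * mu t) (laplace_moment k lam).
Proof.
  intros hk hl. unfold laplace_moment. apply epsilon_spec.
  set (C := 1 + INR (fact k) / lam ^ k).
  assert (hC : 0 <= C).
  { unfold C. assert (0 <= INR (fact k) / lam ^ k); [|lra].
    apply Rdiv_le_0_compat; [apply pos_INR|apply pow_lt; auto]. }
  apply impr_exists with (C * l0).
  - intros t ht. apply laplace_integrand_nonneg; auto.
  - apply (mul_mu_integrable (fun t => t ^ k * exp (- (lam * t)))). intros; reg.
  - intros a b ha hab.
    apply Rle_trans with (RInt (fun t => C * (Rmin 1 t * mu t)) a b).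
    + apply RInt_le; auto.
      * apply (mul_mu_integrable (fun t => t ^ k * exp (- (lam * t)))); auto. intros; reg.
      * apply ex_RInt_Rscal, mu_levy; auto.
      * intros x hx. pose proof (mu_pos x ltac:(lra)). rewrite <- Rmult_assoc.
        apply Rmult_le_compat_r; [lra|]. apply pow_exp_le_min; auto; lra.
    + rewrite RInt_Rscal by (apply mu_levy; auto). apply Rmult_le_compat_l; auto.
      apply impr_ge; auto. intros t ht. pose proof (mu_pos t ht).
      assert (0 < Rmin 1 t) by (unfold Rmin; destruct (Rle_dec 1 t); lra). nra.
Qed.

Lemma laplace_moment_antitone k l1 l2 : (1 <= k)%nat -> 0 < l1 -> l1 <= l2 ->
  laplace_moment k l2 <= laplace_moment k l1.
Proof.
  intros hk h1 h12.
  eapply impr_mono; [apply laplace_moment_spec; auto; lra|apply laplace_moment_spec; auto|].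
  intros t ht. pose proof (mu_pos t ht). pose proof (pow_le t k ltac:(lra)).
  apply Rmult_le_compat_r; [lra|]. apply Rmult_le_compat_l; auto. apply exp_le. nra.
Qed.

Lemma laplace_remainder_bound k lam h t : 0 < lam -> Rabs h <= lam / 2 -> 0 < t ->
  Rabs ((t ^ k * exp (- ((lam + h) * t)) * mu t + -1 * (t ^ k * exp (- (lam * t)) * mu t))
        + h * (t ^ (S k) * exp (- (lam * t)) * mu t))
  <= h ^ 2 * (t ^ (S (S k)) * exp (- (lam / 2 * t)) * mu t).
Proof.
  intros hl hh ht. pose proof (mu_pos t ht).
  replace ((t ^ k * exp (- ((lam + h) * t)) * mu t + -1 * (t ^ k * exp (- (lam * t)) * mu t))
        + h * (t ^ (S k) * exp (- (lam * t)) * mu t)) with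
    ((t ^ k * exp (- ((lam + h) * t)) - t ^ k * exp (- (lam * t))
      + h * (t ^ (S k) * exp (- (lam * t)))) * mu t) by ring.
  rewrite Rabs_mult, (Rabs_right (mu t)) by lra.
  replace (h ^ 2 * (t ^ (S (S k)) * exp (- (lam / 2 * t)) * mu t)) with
    ((h ^ 2 * (t ^ (S (S k)) * exp (- (lam / 2 * t)))) * mu t) by ring.
  apply Rmult_le_compat_r; [lra|]. apply pow_exp_remainder; auto.
Qed.

Lemma laplace_moment_deriv k lam : (1 <= k)%nat -> 0 < lam ->
  derivable_pt_lim (laplace_moment k) lam (- laplace_moment (S k) lam).
Proof.
  intros hk hl.
  apply derivable_of_quadratic_remainder
    with (K := laplace_moment (S (S k)) (lam / 2)) (r := lam / 2); [lra|].
  intros h hh0 hh.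
  assert (hlh : 0 < lam + h) by (pose proof (Rle_abs (- h)); rewrite Rabs_Ropp in *; lra).
  pose proof (impr_plus _ _ _ _
    (impr_plus _ _ _ _ (laplace_moment_spec k (lam + h) hk hlh)
       (impr_scal _ _ (-1) (laplace_moment_spec k lam hk hl)))
    (impr_scal _ _ h (laplace_moment_spec (S k) lam ltac:(lia) hl))) as Hdiff.
  pose proof (impr_scal _ _ (h ^ 2) (laplace_moment_spec (S (S k)) (lam / 2) ltac:(lia) ltac:(lra)))
    as Hbound.
  replace (laplace_moment k (lam + h) - laplace_moment k lam - h * - laplace_moment (S k) lam) with
    (laplace_moment k (lam + h) + -1 * laplace_moment k lam + h * laplace_moment (S k) lam) by ring.
  apply (impr_abs _ _ _ _ Hdiff Hbound). intros t ht.
  apply laplace_remainder_bound; auto; lra.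
Qed.

(* Being nonincreasing, [M_k] stays below its right limit at [0]. *)
Lemma laplace_moment_le_limit k L : (1 <= k)%nat -> lim_right0 (laplace_moment k) L ->
  forall lam, 0 < lam -> laplace_moment k lam <= L.
Proof.
  intros hk hL lam hl. apply Rnot_lt_le. intro hc.
  destruct (hL (laplace_moment k lam - L) ltac:(lra)) as [d [hd hd2]].
  set (l' := Rmin (d/2) lam).
  assert (0 < l' < d /\ l' <= lam) by (unfold l', Rmin; destruct (Rle_dec (d/2) lam); lra).
  specialize (hd2 l' ltac:(lra)).
  pose proof (laplace_moment_antitone k l' lam hk ltac:(lra) ltac:(lra)).
  apply Rabs_def2 in hd2. lra.
Qed.

(* On a compact [[a,b]], [1 - λb <= e^{-λt}] bounds the effect of the
   Laplace damping: [∫_a^b t^k μ <= ∫_a^b t^k e^{-λt} μ + λ b ∫_a^b t^k μ]. *)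
Lemma laplace_damping_defect k lam a b : 0 < lam -> 0 < a -> a <= b ->
  RInt (fun t => t ^ k * mu t) a b
  <= RInt (fun t => t ^ k * exp (- (lam * t)) * mu t) a b
     + lam * b * RInt (fun t => t ^ k * mu t) a b.
Proof.
  intros hl ha hab.
  assert (hi : ex_RInt (fun t => t ^ k * mu t) a b)
    by (apply (mul_mu_integrable (fun t => t ^ k)); auto; intros; reg).
  assert (hmix : RInt (fun t => (1 - lam * b) * (t ^ k * mu t)) a b
                 <= RInt (fun t => t ^ k * exp (- (lam * t)) * mu t) a b).
  2:{ rewrite RInt_Rscal in hmix by auto. nra. }
  apply RInt_le; auto.
  - apply ex_RInt_Rscal; auto.
  - apply (mul_mu_integrable (fun t => t ^ k * exp (- (lam * t)))); auto. intros; reg.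
  - intros x hx. pose proof (mu_pos x ltac:(lra)). pose proof (pow_le x k ltac:(lra)).
    pose proof (exp_ineq1_le (- (lam * x))).
    assert (1 - lam * b <= exp (- (lam * x))) by nra.
    replace (x ^ k * exp (- (lam * x)) * mu x) with (exp (- (lam * x)) * (x ^ k * mu x)) by ring.
    apply Rmult_le_compat_r; nra.
Qed.

(* If [M_k(0+) = L] then [∫ t^k μ = L] (monotone convergence as [λ → 0+]). *)
Lemma moment_of_right_limit k L : (1 <= k)%nat -> lim_right0 (laplace_moment k) L ->
  impr (fun t => t ^ k * mu t) L.
Proof.
  intros hk hL.
  apply (impr_of_approx_below (I := posreal) _
           (fun lam t => t ^ k * exp (- (lam * t)) * mu t) (fun lam => laplace_moment k lam)).
  - apply (mul_mu_integrable (fun t => t ^ k)); intros; reg.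
  - intros [lam hl]. apply laplace_moment_spec; auto.
  - intros [lam hl] t ht. simpl. split; [apply laplace_integrand_nonneg; auto|].
    pose proof (mu_pos t ht). pose proof (pow_le t k ltac:(lra)).
    assert (exp (- (lam * t)) <= 1) by (rewrite <- exp_0; apply exp_le; nra).
    rewrite <- (Rmult_1_r (t ^ k)) at 2. apply Rmult_le_compat_r; [lra|].
    apply Rmult_le_compat_l; lra.
  - intros [lam hl]. apply laplace_moment_le_limit; auto.
  - intros eps he. destruct (hL eps he) as [d [hd hd2]].
    assert (hd' : 0 < d / 2) by lra. exists (mkposreal _ hd'). simpl.
    specialize (hd2 (d/2) ltac:(lra)). apply Rabs_def2 in hd2. lra.
  - intros a b eps ha hab he.
    set (I0 := RInt (fun t => t ^ k * mu t) a b).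
    assert (hI0 : 0 <= I0).
    { apply RInt_ge_0; auto; [apply (mul_mu_integrable (fun t => t ^ k)); auto; intros; reg|].
      intros x hx. pose proof (mu_pos x ltac:(lra)). pose proof (pow_le x k ltac:(lra)). nra. }
    set (lam := eps / (b * I0 + 1)).
    assert (hlam : 0 < lam) by (unfold lam; apply Rdiv_lt_0_compat; nra).
    exists (mkposreal _ hlam). simpl.
    pose proof (laplace_damping_defect k lam a b hlam ha hab) as hdef. fold I0 in hdef.
    assert (lam * b * I0 <= eps); [|lra].
    replace (lam * b * I0) with (lam * (b * I0)) by ring.
    apply Rle_trans with (lam * (b * I0 + 1)); [apply Rmult_le_compat_l; lra|].
    unfold lam. right; field; nra.
Qed.

Lemma exp_partial_integral (m : nat -> R) r :
  (forall n, impr (fun t => t ^ (S n) * mu t) (m n)) ->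
  forall N, impr (fun t => (exp_partial (S N) (r * t) - 1) * mu t)
              (sum_f_R0 (fun n => r ^ (S n) / INR (fact (S n)) * m n) N).
Proof.
  intros hm N. induction N as [|N IH].
  - simpl sum_f_R0. apply impr_ext with (fun t => (r ^ 1 / INR (fact 1)) * (t ^ 1 * mu t)).
    + intros t ht. unfold exp_partial. simpl. field.
    + apply impr_scal, hm.
  - rewrite tech5.
    apply impr_ext with (fun t => (exp_partial (S N) (r * t) - 1) * mu t
                           + (r ^ S (S N) / INR (fact (S (S N)))) * (t ^ S (S N) * mu t)).
    + intros t ht. rewrite (exp_partial_S (S N)), Rpow_mult_distr. field. apply INR_fact_neq_0.
    + apply impr_plus; auto. apply impr_scal, hm.
Qed.

Lemma exp_partial_defect r N a0 b0 : 0 < r -> 0 < a0 -> a0 <= b0 ->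
  RInt (fun t => (exp (r * t) - 1) * mu t) a0 b0
  <= RInt (fun t => (exp_partial (S N) (r * t) - 1) * mu t) a0 b0
     + (exp (r * b0) - exp_partial (S N) (r * b0)) * RInt mu a0 b0.
Proof.
  intros hr ha hab.
  assert (hrem : ex_RInt (fun t => (exp (r * t) - exp_partial (S N) (r * t)) * mu t) a0 b0).
  { apply (mul_mu_integrable (fun t => exp (r * t) - exp_partial (S N) (r * t))); auto.
    intros; apply continuity_pt_minus; [reg|apply exp_partial_continuous]. }
  assert (hpart : ex_RInt (fun t => (exp_partial (S N) (r * t) - 1) * mu t) a0 b0).
  { apply (mul_mu_integrable (fun t => exp_partial (S N) (r * t) - 1)); auto.
    intros; apply continuity_pt_minus; [apply exp_partial_continuous|reg]. }
  rewrite (RInt_Rext _ (fun t => (exp_partial (S N) (r * t) - 1) * mu t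
                                + (exp (r * t) - exp_partial (S N) (r * t)) * mu t))
    by (intros; ring).
  rewrite RInt_Rplus by auto. apply Rplus_le_compat_l.
  rewrite <- RInt_Rscal by (apply mu_integrable; auto).
  apply RInt_le; auto; [apply ex_RInt_Rscal, mu_integrable; auto|].
  intros x hx. pose proof (mu_pos x ltac:(lra)). apply Rmult_le_compat_r; [lra|].
  apply exp_remainder_mono. split; nra.
Qed.

(* Summing the series under the integral (monotone convergence):
   [∫ (e^{rt} - 1) μ = Σ_n r^{n+1}/(n+1)! m n] for [r > 0]. *)
Lemma exp_integral (m : nat -> R) r S0 : 0 < r ->
  (forall n, impr (fun t => t ^ (S n) * mu t) (m n)) ->
  Un_cv (sum_f_R0 (fun n => r ^ (S n) / INR (fact (S n)) * m n)) S0 ->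
  impr (fun t => (exp (r * t) - 1) * mu t) S0.
Proof.
  intros hr hm hcv.
  set (q := fun n => r ^ (S n) / INR (fact (S n)) * m n) in *.
  assert (hq : forall n, 0 <= q n).
  { intros n. unfold q. apply Rmult_le_pos.
    - apply Rdiv_le_0_compat; [apply pow_le; lra|apply INR_fact_lt_0].
    - apply (impr_nonneg _ _ (fun t ht => Rmult_le_pos _ _ (pow_le _ _ (Rlt_le _ _ ht))
                                           (Rlt_le _ _ (mu_pos t ht))) (hm n)). }
  apply (impr_of_approx_below (I := nat) _ (fun N t => (exp_partial (S N) (r * t) - 1) * mu t)
           (sum_f_R0 q)).
  - apply (mul_mu_integrable (fun t => exp (r * t) - 1)). intros; reg.
  - apply exp_partial_integral; auto.
  - intros N t ht. pose proof (mu_pos t ht).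
    pose proof (exp_partial_ge1 (S N) (r * t) ltac:(nra)).
    pose proof (exp_partial_le_exp (r * t) (S N) ltac:(nra)). split; nra.
  - apply growing_ineq; auto. intros n. simpl. pose proof (hq (S n)). lra.
  - intros eps he. destruct (hcv eps he) as [N hN]. exists N.
    specialize (hN N ltac:(lia)). unfold R_dist in hN. apply Rabs_def2 in hN. lra.
  - intros a0 b0 eps ha hab he.
    set (Im := RInt mu a0 b0).
    assert (hIm : 0 <= Im)
      by (apply RInt_ge_0; auto; [apply mu_integrable; auto|intros x hx; left; apply mu_pos; lra]).
    destruct (exp_partial_cv (r * b0) (eps / (Im + 1))) as [N hN]; [apply Rdiv_lt_0_compat; lra|].
    specialize (hN (S N) ltac:(lia)). unfold R_dist in hN.
    rewrite Rabs_minus_sym in hN. apply Rabs_def2 in hN.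
    exists N. pose proof (exp_partial_defect r N a0 b0 hr ha hab) as hdef. fold Im in hdef.
    pose proof (exp_partial_le_exp (r * b0) (S N) ltac:(nra)).
    assert ((exp (r * b0) - exp_partial (S N) (r * b0)) * Im <= eps); [|lra].
    apply Rle_trans with (eps / (Im + 1) * (Im + 1)); [|right; field; lra].
    apply Rmult_le_compat; lra.
Qed.

Section Representation.

Variables (phi : R -> R) (D : nat -> R -> R) (a b : R).
Hypothesis phi_derivs : deriv_seq phi D.
Hypothesis phi_levy_khintchine : forall lam, 0 < lam ->
  impr (fun t => (1 - exp (- (lam * t))) * mu t) (phi lam - a - b * lam).

Lemma phi_derivative lam : 0 < lam -> derivable_pt_lim phi lam (b + laplace_moment 1 lam).
Proof.
  intros hl.
  set (Phi := fun x => phi x - a - b * x).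
  assert (hPhi : derivable_pt_lim Phi lam (laplace_moment 1 lam)).
  { apply derivable_of_quadratic_remainder
      with (K := laplace_moment 2 (lam / 2)) (r := lam / 2); [lra|].
    intros h hh0 hh.
    assert (hlh : 0 < lam + h) by (pose proof (Rle_abs (- h)); rewrite Rabs_Ropp in *; lra).
    pose proof (impr_plus _ _ _ _
      (impr_plus _ _ _ _ (phi_levy_khintchine (lam + h) hlh)
         (impr_scal _ _ (-1) (phi_levy_khintchine lam hl)))
      (impr_scal _ _ (- h) (laplace_moment_spec 1 lam ltac:(lia) hl))) as Hdiff.
    pose proof (impr_scal _ _ (h ^ 2) (laplace_moment_spec 2 (lam / 2) ltac:(lia) ltac:(lra)))
      as Hbound.
    unfold Phi.
    replace (phi (lam + h) - a - b * (lam + h) - (phi lam - a - b * lam) - h * laplace_moment 1 lam)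
      with (phi (lam + h) - a - b * (lam + h) + -1 * (phi lam - a - b * lam)
            + - h * laplace_moment 1 lam) by ring.
    apply (impr_abs _ _ _ _ Hdiff Hbound). intros t ht.
    eapply Rle_trans; [|apply (laplace_remainder_bound 0 lam h t); auto; lra].
    right. rewrite <- Rabs_Ropp. f_equal. simpl. ring. }
  apply (derivable_pt_lim_local (fun x => (a + b * x) + Phi x) phi lam _ 1); [lra| |].
  - replace (b + laplace_moment 1 lam) with ((0 + b * 1) + laplace_moment 1 lam) by ring.
    apply derivable_pt_lim_plus; auto.
    apply derivable_pt_lim_plus; [apply derivable_pt_lim_const|].
    apply derivable_pt_lim_scal, derivable_pt_lim_id.
  - intros y _. unfold Phi. ring.
Qed.

(* The drift [b] only contributes to the first derivative. *)
Definition drift_coeff (n : nat) : R := match n with O => b | _ => 0 end.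

Lemma derivatives_as_moments n lam : 0 < lam ->
  D (S n) lam = drift_coeff n + (-1) ^ n * laplace_moment (S n) lam.
Proof.
  destruct phi_derivs as [HD0 HDS]. revert lam.
  induction n as [|n IH]; intros lam hl.
  - apply uniqueness_limite with (f := phi) (x := lam).
    + apply (derivable_pt_lim_local (D 0%nat) phi lam _ lam); auto.
      intros y hy. apply HD0. apply Rabs_def2 in hy. lra.
    + simpl. rewrite Rmult_1_l. apply phi_derivative; auto.
  - apply uniqueness_limite
      with (f := fun x => drift_coeff n + (-1) ^ n * laplace_moment (S n) x) (x := lam).
    + apply (derivable_pt_lim_local (D (S n)) _ lam _ lam); auto.
      intros y hy. apply IH. apply Rabs_def2 in hy. lra.
    + replace (drift_coeff (S n) + (-1) ^ S n * laplace_moment (S (S n)) lam) with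
        (0 + (-1) ^ n * (- laplace_moment (S (S n)) lam)) by (simpl; ring).
      apply derivable_pt_lim_plus; [apply derivable_pt_lim_const|].
      apply derivable_pt_lim_scal, laplace_moment_deriv; auto; lia.
Qed.

Section TaylorCoefficients.

Variable c : nat -> R.
Hypothesis c_limits : forall n, lim_right0 (D n) (c n).

Definition moment_from_coeff (n : nat) : R := (-1) ^ n * (c (S n) - drift_coeff n).

Lemma moments_from_coeffs n : impr (fun t => t ^ (S n) * mu t) (moment_from_coeff n).
Proof.
  apply moment_of_right_limit; [lia|].
  apply lim_right0_affine with (D (S n)); auto.
  intros x hx. rewrite derivatives_as_moments by auto.
  replace ((-1) ^ n * (drift_coeff n + (-1) ^ n * laplace_moment (S n) x - drift_coeff n))
    with (((-1) ^ n * (-1) ^ n) * laplace_moment (S n) x) by ring.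
  rewrite m1_pow_sq; ring.
Qed.

Lemma coeff_succ n : c (S n) = drift_coeff n + (-1) ^ n * moment_from_coeff n.
Proof.
  unfold moment_from_coeff.
  replace (drift_coeff n + (-1) ^ n * ((-1) ^ n * (c (S n) - drift_coeff n)))
    with (drift_coeff n + ((-1) ^ n * (-1) ^ n) * (c (S n) - drift_coeff n)) by ring.
  rewrite m1_pow_sq. ring.
Qed.

(* [0 <= φ(x) - a - bx <= x ∫ t μ], hence [φ(0+) = a]. *)
Lemma coeff_zero : c 0%nat = a.
Proof.
  apply lim_right0_unique with (D 0%nat); auto.
  set (m0 := moment_from_coeff 0).
  assert (hm0 : 0 <= m0).
  { apply (impr_nonneg _ _ (fun t ht => Rmult_le_pos _ _ (pow_le _ _ (Rlt_le _ _ ht))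
                                          (Rlt_le _ _ (mu_pos t ht)))
             (moments_from_coeffs 0)). }
  pose proof (Rabs_pos b).
  intros eps he. exists (eps / (Rabs b + m0 + 1)). split; [apply Rdiv_lt_0_compat; lra|].
  intros x [hx0 hx]. destruct phi_derivs as [HD0 _]. rewrite HD0 by auto.
  assert (hub : phi x - a - b * x <= x * m0).
  { eapply impr_mono; [apply (phi_levy_khintchine x hx0)|apply (impr_scal _ _ x (moments_from_coeffs 0))|].
    intros t ht. pose proof (mu_pos t ht). pose proof (exp_ineq1_le (- (x * t))).
    simpl. replace (x * (t * 1 * mu t)) with ((x * t) * mu t) by ring.
    apply Rmult_le_compat_r; lra. }
  assert (hlb : 0 <= phi x - a - b * x).
  { eapply impr_nonneg; [|apply (phi_levy_khintchine x hx0)]. intros t ht. pose proof (mu_pos t ht).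
    assert (exp (- (x * t)) <= 1) by (rewrite <- exp_0; apply exp_le; nra). nra. }
  replace (phi x - a) with ((phi x - a - b * x) + b * x) by ring.
  eapply Rle_lt_trans; [apply Rabs_triang|].
  rewrite Rabs_mult, (Rabs_right (phi x - a - b * x)), (Rabs_right x) by lra.
  apply Rle_lt_trans with (x * (Rabs b + m0 + 1)); [nra|].
  replace eps with (eps / (Rabs b + m0 + 1) * (Rabs b + m0 + 1)) by (field; lra).
  apply Rmult_lt_compat_r; lra.
Qed.

Lemma taylor_partial_sum r N :
  sum_f_R0 (fun n => c n / INR (fact n) * (- r) ^ n) (S N)
  = a - b * r - sum_f_R0 (fun n => r ^ (S n) / INR (fact (S n)) * moment_from_coeff n) N.
Proof.
  induction N as [|N IH].
  - simpl. rewrite coeff_zero, coeff_succ. simpl. field.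
  - rewrite tech5, IH, tech5, coeff_succ. simpl drift_coeff.
    assert (hf : 0 < INR (fact (S (S N)))) by apply INR_fact_lt_0.
    replace ((- r) ^ S (S N)) with ((-1) ^ S (S N) * r ^ S (S N))
      by (rewrite <- Rpow_mult_distr; f_equal; ring).
    replace ((-1) ^ S (S N)) with (-1 * (-1) ^ S N) by reflexivity.
    replace ((0 + (-1) ^ S N * moment_from_coeff (S N)) / INR (fact (S (S N)))
               * (-1 * (-1) ^ S N * r ^ S (S N)))
      with (- (((-1) ^ S N * (-1) ^ S N) * moment_from_coeff (S N) / INR (fact (S (S N)))
               * r ^ S (S N))) by (field; lra).
    rewrite m1_pow_sq. field. lra.
Qed.

End TaylorCoefficients.

Lemma extension_levy_khintchine phie : extension phi D beta phie ->
  forall z, - beta < z -> impr (fun t => (1 - exp (- (z * t))) * mu t) (phie z - a - b * z).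
Proof.
  intros [He1 He2] z hz.
  destruct (Rlt_le_dec 0 z) as [hz0|hz0]; [rewrite He1 by auto; auto|].
  destruct (He2 z (conj hz hz0)) as [c [hlim hs]].
  destruct hz0 as [hz0| ->].
  - set (r := - z) in *. assert (hr : 0 < r) by (unfold r; lra).
    assert (hzr : z = - r) by (unfold r; ring). clearbody r. subst z.
    set (S0 := a - b * r - phie (- r)).
    assert (hcv : Un_cv (sum_f_R0 (fun n => r ^ (S n) / INR (fact (S n)) * moment_from_coeff c n)) S0).
    { intros eps he. destruct (hs eps he) as [N0 hN0]. exists N0. intros n hn.
      specialize (hN0 (S n) ltac:(lia)). unfold R_dist in *.
      rewrite taylor_partial_sum in hN0 by auto.
      rewrite Rabs_minus_sym. unfold S0.
      replace (a - b * r - phie (- r) - sum_f_R0 (fun n => r ^ S n / INR (fact (S n)) * moment_from_coeff c n) n)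
        with (a - b * r - sum_f_R0 (fun n => r ^ S n / INR (fact (S n)) * moment_from_coeff c n) n - phie (- r))
        by ring. auto. }
    pose proof (exp_integral _ r S0 hr (moments_from_coeffs c hlim) hcv) as hE.
    apply impr_ext with (fun t => -1 * ((exp (r * t) - 1) * mu t)).
    + intros t ht. replace (- (- r * t)) with (r * t) by ring. ring.
    + replace (phie (- r) - a - b * - r) with (-1 * S0) by (unfold S0; ring).
      apply impr_scal; auto.
  - apply series_at0 in hs. rewrite hs, (coeff_zero c hlim).
    replace (a - a - b * 0) with (0 * (phi 1 - a - b * 1)) by ring.
    apply impr_ext with (fun t => 0 * ((1 - exp (- (1 * t))) * mu t)).
    + intros t _. replace (- (0 * t)) with 0 by ring. rewrite exp_0. ring.
    + apply impr_scal, phi_levy_khintchine. lra.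
Qed.

End Representation.

Section SecondDerivativeBounds.

Variables (phie phie1 phie2 : R -> R) (a b : R).
Hypothesis phie_levy_khintchine : forall z, - beta < z ->
  impr (fun t => (1 - exp (- (z * t))) * mu t) (phie z - a - b * z).
Hypothesis phie_deriv1 : forall x, - beta < x -> derivable_pt_lim phie x (phie1 x).
Hypothesis phie_deriv2 : forall x, - beta < x -> derivable_pt_lim phie1 x (phie2 x).

Lemma second_difference_integral y h : - beta < y - h -> 0 < h ->
  impr (fun t => / h ^ 2 * (sd_kernel y h t * mu t))
       (/ h ^ 2 * - (phie (y + h) + phie (y - h) - 2 * phie y)).
Proof.
  intros h1 h2. apply impr_scal.
  pose proof (impr_scal _ _ (-1)
    (impr_plus _ _ _ _
       (impr_plus _ _ _ _ (phie_levy_khintchine (y + h) ltac:(lra))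
          (phie_levy_khintchine (y - h) ltac:(lra)))
       (impr_scal _ _ (-2) (phie_levy_khintchine y ltac:(lra))))) as HA.
  eapply impr_ext; [|replace (- (phie (y + h) + phie (y - h) - 2 * phie y)) with
     (-1 * (phie (y + h) - a - b * (y + h) + (phie (y - h) - a - b * (y - h))
            + -2 * (phie y - a - b * y))) by ring; exact HA].
  intros t _. unfold sd_kernel. ring.
Qed.

Lemma sd_integrand_nonneg y h t : 0 < h -> 0 < t -> 0 <= / h ^ 2 * (sd_kernel y h t * mu t).
Proof.
  intros hh ht. pose proof (mu_pos t ht). pose proof (exp_pos (- (y * t))).
  pose proof (pow_le t 2 ltac:(lra)).
  rewrite <- Rmult_assoc. apply Rmult_le_pos; [|lra].
  eapply Rle_trans; [|apply sd_kernel_lower; auto]. apply Rmult_le_pos; lra.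
Qed.

Lemma second_derivative_approx y eps hmax : - beta < y -> 0 < eps -> 0 < hmax ->
  exists h Q, 0 < h <= hmax /\ - beta < y - h /\
    impr (fun t => / h ^ 2 * (sd_kernel y h t * mu t)) Q /\ Rabs (Q + phie2 y) <= eps.
Proof.
  intros hy he hm.
  destruct (second_difference_limit phie phie1 y (phie2 y) (y + beta) ltac:(lra)
              (fun x hx => phie_deriv1 x ltac:(apply Rabs_def2 in hx; lra))
              (phie_deriv2 y hy) eps he) as [h0 [hh0 HSD]].
  set (h := Rmin (h0 / 2) (Rmin hmax ((y + beta) / 2))).
  assert (hh : 0 < h < h0 /\ h <= hmax /\ h <= (y + beta) / 2).
  { unfold h, Rmin. repeat destruct Rle_dec; lra. }
  exists h, (/ h ^ 2 * - (phie (y + h) + phie (y - h) - 2 * phie y)).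
  split; [lra|split; [lra|split]].
  - apply second_difference_integral; lra.
  - specialize (HSD h ltac:(lra)).
    replace (/ h ^ 2 * - (phie (y + h) + phie (y - h) - 2 * phie y) + phie2 y)
      with (- ((phie (y + h) + phie (y - h) - 2 * phie y) / h ^ 2 - phie2 y))
      by (unfold Rdiv; ring).
    rewrite Rabs_Ropp. auto.
Qed.

Lemma second_derivative_lower y p q : - beta < y -> 0 < p -> p <= q ->
  RInt (fun t => t ^ 2 * exp (- (y * t)) * mu t) p q <= - phie2 y.
Proof.
  intros hy hp hpq. apply Rle_plus_epsilon. intros eps he.
  destruct (second_derivative_approx y eps 1 hy he ltac:(lra)) as [h [Q [hh [_ [HI HQ]]]]].
  apply Rabs_le_between in HQ.
  assert (RInt (fun t => t ^ 2 * exp (- (y * t)) * mu t) p q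
          <= RInt (fun t => / h ^ 2 * (sd_kernel y h t * mu t)) p q).
  { apply RInt_le; auto.
    - apply (mul_mu_integrable (fun t => t ^ 2 * exp (- (y * t)))); auto. intros; reg.
    - apply (proj1 HI); auto.
    - intros x hx. pose proof (mu_pos x ltac:(lra)). rewrite <- Rmult_assoc.
      apply Rmult_le_compat_r; [lra|]. apply sd_kernel_lower; lra. }
  pose proof (impr_ge _ _ p q (fun t ht => sd_integrand_nonneg y h t (proj1 hh) ht) HI hp hpq).
  lra.
Qed.

(* Restricted to [[p,q]] and using that [ν] is nonincreasing:
   [(q-p) p² e^{-(y+β)q} ν(q) <= -φ_e''(y)]. *)
Lemma second_derivative_lower_window y p q : - beta < y -> 0 < p -> p <= q ->
  (q - p) * (p ^ 2 * exp (- ((y + beta) * q)) * (exp (beta * q) * mu q)) <= - phie2 y.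
Proof.
  intros hy hp hpq. eapply Rle_trans; [|apply (second_derivative_lower y p q); auto].
  set (C := p ^ 2 * exp (- ((y + beta) * q)) * (exp (beta * q) * mu q)).
  replace ((q - p) * C) with (RInt (fun _ => C) p q) by (rewrite RInt_Rconst; apply Rmult_comm).
  apply RInt_le; auto; [apply ex_RInt_const|
    apply (mul_mu_integrable (fun t => t ^ 2 * exp (- (y * t)))); auto; intros; reg|].
  intros t ht. unfold C.
  replace (t ^ 2 * exp (- (y * t)) * mu t)
    with (t ^ 2 * exp (- ((y + beta) * t)) * (exp (beta * t) * mu t))
    by (replace (- (y * t)) with (- ((y + beta) * t) + beta * t) by ring; rewrite exp_plus; ring).
  pose proof (nu_nonincreasing t q ltac:(lra) ltac:(lra)). pose proof (mu_pos q ltac:(lra)).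
  pose proof (exp_pos (beta * q)). pose proof (exp_pos (- ((y + beta) * q))).
  assert (p ^ 2 <= t ^ 2) by (apply pow_incr; lra).
  assert (exp (- ((y + beta) * q)) <= exp (- ((y + beta) * t))) by (apply exp_le; nra).
  assert (0 <= p ^ 2) by (apply pow_le; lra).
  apply Rmult_le_compat; nra.
Qed.

Lemma neg_second_derivative_pos y : - beta < y -> 0 < - phie2 y.
Proof.
  intros hy. eapply Rlt_le_trans; [|apply (second_derivative_lower_window y 1 2); auto; lra].
  pose proof (mu_pos 2 ltac:(lra)). pose proof (exp_pos (beta * 2)).
  pose proof (exp_pos (- ((y + beta) * 2))).
  replace ((2 - 1) * (1 ^ 2 * exp (- ((y + beta) * 2)) * (exp (beta * 2) * mu 2)))
    with (exp (- ((y + beta) * 2)) * (exp (beta * 2) * mu 2)) by ring.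
  apply Rmult_lt_0_compat; [lra|nra].
Qed.

(* Upper estimates of the second-difference integral at [y = λ - β], split
   at a point [u]: below [u] compare with [-φ_e''(λx - β)], above [u] use
   [ν(t) <= ν(u)]. *)
Lemma sd_integral_below lam x u h p : 0 < lam -> 1 <= x -> 0 < h <= lam / 2 -> 0 < p <= u ->
  RInt (fun t => / h ^ 2 * (sd_kernel (lam - beta) h t * mu t)) p u
  <= exp ((lam * (x - 1) + h) * u) * (- phie2 (lam * x - beta)).
Proof.
  intros hl hx hh hp.
  set (K := exp ((lam * (x - 1) + h) * u)).
  set (w := fun t => t ^ 2 * exp (- ((lam * x - beta) * t)) * mu t).
  assert (hw : ex_RInt w p u)
    by (apply (mul_mu_integrable (fun t => t ^ 2 * exp (- ((lam * x - beta) * t)))); auto; try lra;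
        intros; reg).
  apply Rle_trans with (RInt (fun t => K * w t) p u).
  - apply RInt_le; try lra.
    + apply ex_RInt_Rscal, (mul_mu_integrable (sd_kernel (lam - beta) h)); try lra.
      intros; unfold sd_kernel; reg.
    + apply ex_RInt_Rscal; auto.
    + intros t ht. pose proof (mu_pos t ltac:(lra)). rewrite <- Rmult_assoc.
      unfold w. rewrite <- Rmult_assoc. apply Rmult_le_compat_r; [lra|].
      eapply Rle_trans; [apply sd_kernel_upper; lra|].
      replace (t ^ 2 * exp (- ((lam - beta - h) * t)))
        with (exp ((lam * (x - 1) + h) * t) * (t ^ 2 * exp (- ((lam * x - beta) * t))))
        by (replace (- ((lam - beta - h) * t))
              with ((lam * (x - 1) + h) * t + - ((lam * x - beta) * t)) by ring;
            rewrite exp_plus; ring).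
      apply Rmult_le_compat_r; [apply Rmult_le_pos; [apply pow_le; lra|left; apply exp_pos]|].
      unfold K. apply exp_le. apply Rmult_le_compat_l; nra.
  - rewrite RInt_Rscal by auto. apply Rmult_le_compat_l; [left; apply exp_pos|].
    apply second_derivative_lower; nra.
Qed.

Lemma sd_integral_above lam h u q : 0 < lam -> 0 < h <= lam / 2 -> 0 < u <= q ->
  RInt (fun t => / h ^ 2 * (sd_kernel (lam - beta) h t * mu t)) u q
  <= exp (beta * u) * mu u * (u ^ 2 / (lam - h) + 2 * u / (lam - h) ^ 2 + 2 / (lam - h) ^ 3).
Proof.
  intros hl hh hu.
  set (C := exp (beta * u) * mu u).
  assert (hC : 0 <= C) by (unfold C; pose proof (mu_pos u ltac:(lra)); pose proof (exp_pos (beta * u)); nra).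
  assert (hw : ex_RInt (fun t => t ^ 2 * exp (- ((lam - h) * t))) u q) by (apply ex_RInt_Rcont; intros; reg).
  apply Rle_trans with (RInt (fun t => C * (t ^ 2 * exp (- ((lam - h) * t)))) u q).
  - apply RInt_le; try lra.
    + apply ex_RInt_Rscal, (mul_mu_integrable (sd_kernel (lam - beta) h)); try lra.
      intros; unfold sd_kernel; reg.
    + apply ex_RInt_Rscal; auto.
    + intros t ht. pose proof (mu_pos t ltac:(lra)). rewrite <- Rmult_assoc.
      eapply Rle_trans; [apply Rmult_le_compat_r; [lra|apply sd_kernel_upper; lra]|].
      replace (t ^ 2 * exp (- ((lam - beta - h) * t)) * mu t)
        with ((exp (beta * t) * mu t) * (t ^ 2 * exp (- ((lam - h) * t))))
        by (replace (- ((lam - beta - h) * t)) with (beta * t + - ((lam - h) * t)) by ring;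
            rewrite exp_plus; ring).
      apply Rmult_le_compat_r; [apply Rmult_le_pos; [apply pow_le; lra|left; apply exp_pos]|].
      apply nu_nonincreasing; lra.
  - rewrite RInt_Rscal by auto. apply Rmult_le_compat_l; auto. apply RInt_t2_exp_le; lra.
Qed.

Lemma sd_integral_compact_bound lam x u h p q :
  0 < lam -> 1 <= x -> 0 < u -> 0 < h <= lam / 2 -> 0 < p -> p <= q ->
  RInt (fun t => / h ^ 2 * (sd_kernel (lam - beta) h t * mu t)) p q <=
  exp ((lam * (x - 1) + h) * u) * (- phie2 (lam * x - beta)) +
  exp (beta * u) * mu u * (u ^ 2 / (lam - h) + 2 * u / (lam - h) ^ 2 + 2 / (lam - h) ^ 3).
Proof.
  intros hl hx hu hh hp hpq.
  set (g := fun t => / h ^ 2 * (sd_kernel (lam - beta) h t * mu t)).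
  assert (hg : forall p q, 0 < p -> p <= q -> ex_RInt g p q)
    by (intros; apply (proj1 (second_difference_integral (lam - beta) h ltac:(lra) ltac:(lra))); auto).
  set (p' := Rmin p u). set (q' := Rmax q u).
  assert (hp' : 0 < p' /\ p' <= p /\ p' <= u) by (unfold p', Rmin; destruct (Rle_dec p u); lra).
  assert (hq' : q <= q' /\ u <= q') by (unfold q', Rmax; destruct (Rle_dec q u); lra).
  assert (RInt g p q <= RInt g p' q').
  { rewrite (RInt_split3 g p' p q q') by (auto; lra).
    assert (0 <= RInt g p' p)
      by (apply RInt_ge_0; [lra|apply hg; lra|intros; apply sd_integrand_nonneg; lra]).
    assert (0 <= RInt g q q')
      by (apply RInt_ge_0; [lra|apply hg; lra|intros; apply sd_integrand_nonneg; lra]).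
    lra. }
  rewrite <- (RInt_Rchasles g p' u q') in H by (apply hg; lra).
  pose proof (sd_integral_below lam x u h p' hl hx hh ltac:(lra)).
  pose proof (sd_integral_above lam h u q' hl hh ltac:(lra)).
  unfold g in *. lra.
Qed.

Lemma second_derivative_upper lam x u : 0 < lam -> 1 <= x -> 0 < u ->
  - phie2 (lam - beta) <= exp (lam * (x - 1) * u + 1) * (- phie2 (lam * x - beta)) +
    exp (beta * u) * mu u * (2 * u ^ 2 / lam + 8 * u / lam ^ 2 + 16 / lam ^ 3).
Proof.
  intros hl hx hu. apply Rle_plus_epsilon. intros eps he.
  assert (hu' : 0 < / u) by (apply Rinv_0_lt_compat; auto).
  destruct (second_derivative_approx (lam - beta) eps (Rmin (lam / 2) (/ u)) ltac:(lra) he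
              ltac:(apply Rmin_glb_lt; lra)) as [h [Q [hh [_ [HI HQ]]]]].
  assert (hh2 : h <= lam / 2 /\ h <= / u) by (unfold Rmin in hh; destruct (Rle_dec (lam / 2) (/ u)); lra).
  apply Rabs_le_between in HQ.
  pose proof (impr_le _ _ _ HI (fun p q hp hpq =>
    sd_integral_compact_bound lam x u h p q hl hx hu ltac:(lra) hp hpq)) as HB.
  assert (hhu : h * u <= 1).
  { apply Rle_trans with (/ u * u); [apply Rmult_le_compat_r; lra|right; field; lra]. }
  assert (exp ((lam * (x - 1) + h) * u) * (- phie2 (lam * x - beta))
          <= exp (lam * (x - 1) * u + 1) * (- phie2 (lam * x - beta))).
  { apply Rmult_le_compat_r; [left; apply neg_second_derivative_pos; nra|].
    apply exp_le. nra. }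
  assert (exp (beta * u) * mu u * (u ^ 2 / (lam - h) + 2 * u / (lam - h) ^ 2 + 2 / (lam - h) ^ 3)
          <= exp (beta * u) * mu u * (2 * u ^ 2 / lam + 8 * u / lam ^ 2 + 16 / lam ^ 3)).
  { apply Rmult_le_compat_l; [pose proof (mu_pos u hu); pose proof (exp_pos (beta * u)); nra|].
    apply shifted_poly_le; lra. }
  lra.
Qed.

(* Part (i): [μ(t) <= 8e · t^{-3} (-φ_e''(1/t - β)) e^{-βt}], from the lower
   estimate on the window [[t/2, t]] at [y = 1/t - β]. *)
Lemma density_upper_bound : exists c1, 0 < c1 /\ forall t, 0 < t ->
  mu t <= - c1 * / (t ^ 3) * phie2 (/ t - beta) * exp (- (beta * t)).
Proof.
  exists (8 * exp 1). split; [pose proof (exp_pos 1); lra|].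
  intros t ht. assert (hti : 0 < / t) by (apply Rinv_0_lt_compat; auto).
  pose proof (second_derivative_lower_window (/ t - beta) (t / 2) t ltac:(lra) ltac:(lra) ltac:(lra))
    as hL.
  replace (- ((/ t - beta + beta) * t)) with (Ropp 1) in hL by (field; lra).
  rewrite exp_Ropp in hL.
  set (G := - phie2 (/ t - beta)) in *.
  pose proof (exp_pos 1). pose proof (exp_pos (beta * t)).
  assert (t3 : 0 < t ^ 3) by (apply pow_lt; auto).
  replace (- (8 * exp 1) * / t ^ 3 * phie2 (/ t - beta) * exp (- (beta * t)))
    with ((8 * exp 1) * / t ^ 3 * / exp (beta * t) * G) by (unfold G; rewrite exp_Ropp; ring).
  assert (hc : 0 <= 8 * exp 1 * / t ^ 3 * / exp (beta * t)).
  { repeat apply Rmult_le_pos; try lra; left; apply Rinv_0_lt_compat; auto. }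
  eapply Rle_trans; [|apply (Rmult_le_compat_l _ _ _ hc hL)].
  right. field. split; lra.
Qed.

Lemma ratio_bound P Q k : P < 0 -> Q / P <= k -> - Q <= k * (- P).
Proof.
  intros hP h. assert (Q = Q / P * P) by (field; lra).
  assert (k * (- P) >= Q / P * (- P)) by (apply Rle_ge, Rmult_le_compat_r; lra). lra.
Qed.

Lemma second_derivative_by_density lam x t : 0 < lam -> 2 <= x -> lam * (x - 1) * t = 1 ->
  - phie2 (lam * x - beta) <= / 18 * (- phie2 (lam - beta)) ->
  - phie2 (lam - beta) <= 52 * (exp (beta * t) * mu t) * t ^ 3 * (x - 1) ^ 3.
Proof.
  intros hl hx hlt hdecay.
  assert (hlx : 0 < lam * (x - 1)) by nra.
  assert (ht : 0 < t) by (destruct (Rle_lt_dec t 0); [nra|auto]).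
  pose proof (second_derivative_upper lam x t hl ltac:(lra) ht) as hU.
  rewrite hlt in hU. replace (1 + 1) with 2 in hU by ring.
  assert (he2 : exp 2 <= 9).
  { replace 2 with (1 + 1) by ring. rewrite exp_plus. pose proof exp_le_3. pose proof (exp_pos 1). nra. }
  pose proof (neg_second_derivative_pos (lam * x - beta) ltac:(nra)).
  assert (exp 2 * (- phie2 (lam * x - beta)) <= / 2 * (- phie2 (lam - beta))) by nra.
  set (nu := exp (beta * t) * mu t) in *.
  assert (hnu : 0 < nu) by (unfold nu; pose proof (exp_pos (beta * t)); pose proof (mu_pos t ht); nra).
  assert (hlam : lam = / ((x - 1) * t)) by (field_simplify_eq; [lra|split; nra]).
  assert (2 * t ^ 2 / lam + 8 * t / lam ^ 2 + 16 / lam ^ 3 <= 26 * t ^ 3 * (x - 1) ^ 3).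
  { rewrite hlam.
    replace (2 * t ^ 2 / / ((x - 1) * t) + 8 * t / (/ ((x - 1) * t)) ^ 2 + 16 / (/ ((x - 1) * t)) ^ 3)
      with ((2 / (x - 1) ^ 2 + 8 / (x - 1) + 16) * t ^ 3 * (x - 1) ^ 3) by (field; split; nra).
    assert (hx1 : 1 <= x - 1) by lra.
    assert (hv : 0 < / (x - 1) <= 1).
    { split; [apply Rinv_0_lt_compat; lra|rewrite <- Rinv_1; apply Rinv_le_contravar; lra]. }
    assert (2 / (x - 1) ^ 2 <= 2).
    { replace (2 / (x - 1) ^ 2) with (2 * (/ (x - 1) * / (x - 1))) by (field; lra). nra. }
    assert (8 / (x - 1) <= 8) by (unfold Rdiv; lra).
    assert (0 < t ^ 3 * (x - 1) ^ 3) by (apply Rmult_lt_0_compat; apply pow_lt; lra).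
    nra. }
  nra.
Qed.

Lemma lower_bound_from_nu t C P : 0 < t -> 0 < C ->
  - P <= C * (exp (beta * t) * mu t) * t ^ 3 ->
  mu t >= - / C * / (t ^ 3) * P * exp (- (beta * t)).
Proof.
  intros ht hC hP. assert (t3 : 0 < t ^ 3) by (apply pow_lt; auto).
  pose proof (exp_pos (- (beta * t))).
  assert (enu : mu t = (exp (beta * t) * mu t) * exp (- (beta * t))).
  { rewrite Rmult_comm, <- Rmult_assoc, <- exp_plus.
    replace (- (beta * t) + beta * t) with 0 by ring. rewrite exp_0; ring. }
  apply Rle_ge. rewrite enu at 1.
  replace (- / C * / t ^ 3 * P * exp (- (beta * t)))
    with ((/ C * / t ^ 3 * - P) * exp (- (beta * t))) by ring.
  apply Rmult_le_compat_r; [lra|].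
  apply Rle_trans with (/ C * / t ^ 3 * (C * (exp (beta * t) * mu t) * t ^ 3)).
  - apply Rmult_le_compat_l; auto.
    apply Rmult_le_pos; left; apply Rinv_0_lt_compat; auto.
  - right. field. split; lra.
Qed.

(* Part (ii): under the ratio hypothesis on [(Λ₁, Λ₂)], a matching lower
   bound on the window [(δ/Λ₂, δ/Λ₁)] with [δ = 1/(x-1)] for a decay point [x]. *)
Lemma density_lower_bound (theta Lambda1 : R) (Lambda2 : option R) (gamma : R) :
  0 < theta -> 0 <= Lambda1 -> lt_ext Lambda1 Lambda2 -> 0 < gamma ->
  (forall x lam, 1 <= x -> Lambda1 < lam -> lt_ext lam Lambda2 ->
     phie2 (lam * x - beta) / phie2 (lam - beta) <= theta * Rpower x (- gamma)) ->
  exists c2 delta, 0 < c2 /\ 0 < delta < 1 /\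
    forall t,
      (match Lambda2 with Some L2 => delta / L2 < t | None => 0 < t end) ->
      (Lambda1 = 0 \/ t < delta / Lambda1) ->
      mu t >= - c2 * / (t ^ 3) * phie2 (/ t - beta) * exp (- (beta * t)).
Proof.
  intros hth hL1 hL12 hg Hratio.
  destruct (decay_point theta gamma hth hg) as [x [hx hdecay]].
  set (delta := / (x - 1)).
  assert (hd : 0 < delta < 1).
  { unfold delta. split; [apply Rinv_0_lt_compat; lra|].
    rewrite <- Rinv_1. apply Rinv_lt_contravar; lra. }
  assert (hx3 : 0 < (x - 1) ^ 3) by (apply pow_lt; lra).
  exists (/ (52 * theta * (x - 1) ^ 3)), delta.
  split; [apply Rinv_0_lt_compat; nra|split; [auto|]].
  intros t ht1 ht2.
  destruct (window_parameter delta Lambda1 t Lambda2 ltac:(lra) hL1 hL12 ht1 ht2)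
    as [ht [hlam1 hlam2]].
  set (lam := delta / t) in *.
  assert (hlam : 0 < lam) by (unfold lam; apply Rdiv_lt_0_compat; lra).
  assert (hlt : lam * (x - 1) * t = 1) by (unfold lam, delta; field; split; lra).
  pose proof (neg_second_derivative_pos (lam - beta) ltac:(lra)) as hG.
  (* decay from [λ] to [λx] gives the density bound at [λ] *)
  assert (hGlam : - phie2 (lam - beta) <= 52 * (exp (beta * t) * mu t) * t ^ 3 * (x - 1) ^ 3).
  { apply second_derivative_by_density; [auto|lra|auto|].
    apply Rle_trans with (theta * Rpower x (- gamma) * (- phie2 (lam - beta))).
    - apply ratio_bound; [lra|apply Hratio; auto; lra].
    - apply Rmult_le_compat_r; lra. }
  (* comparing [1/t = λ(x-1)] with [λ] *)
  assert (hG1 : - phie2 (/ t - beta) <= theta * (- phie2 (lam - beta))).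
  { replace (/ t) with (lam * (x - 1)) by (unfold lam, delta; field; split; lra).
    apply Rle_trans with (theta * Rpower (x - 1) (- gamma) * (- phie2 (lam - beta))).
    - apply ratio_bound; [lra|apply Hratio; auto; lra].
    - apply Rmult_le_compat_r; [lra|].
      rewrite <- (Rmult_1_r theta) at 2. apply Rmult_le_compat_l; [lra|].
      apply Rpower_neg_le1; lra. }
  apply lower_bound_from_nu; [auto|nra|].
  eapply Rle_trans; [exact hG1|].
  replace (52 * theta * (x - 1) ^ 3 * (exp (beta * t) * mu t) * t ^ 3)
    with (theta * (52 * (exp (beta * t) * mu t) * t ^ 3 * (x - 1) ^ 3)) by ring.
  apply Rmult_le_compat_l; lra.
Qed.

End SecondDerivativeBounds.

End LevyDensity.

Theorem corollary4p1
  (phi : R -> R) (D : nat -> R -> R) (beta : R) (mu : R -> R)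
  (phie phie1 phie2 : R -> R) :
  bernstein phi ->
  deriv_seq phi D ->
  beta_spec D beta ->
  (* the Levy measure of phi has density mu : (0,oo) -> (0,oo) *)
  (forall t, 0 < t -> 0 < mu t) ->
  (exists l, improper_int0inf (fun t => Rmin 1 t * mu t) l) ->
  (exists a b, 0 <= a /\ 0 <= b /\
     forall lam, 0 < lam ->
       improper_int0inf (fun t => (1 - exp (- (lam * t))) * mu t)
         (phi lam - a - b * lam)) ->
  (* t |-> e^{beta t} mu(t) is non-increasing *)
  (forall s t, 0 < s -> s <= t -> exp (beta * t) * mu t <= exp (beta * s) * mu s) ->
  (* phie is the extension phi_e, phie1 = phi_e', phie2 = phi_e'' on (-beta,oo) *)
  extension phi D beta phie ->
  (forall x, - beta < x -> derivable_pt_lim phie x (phie1 x)) ->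
  (forall x, - beta < x -> derivable_pt_lim phie1 x (phie2 x)) ->
  (* (i) *)
  (exists c1, 0 < c1 /\ forall t, 0 < t ->
     mu t <= - c1 * / (t ^ 3) * phie2 (/ t - beta) * exp (- (beta * t)))
  /\
  (* (ii) ; Lambda2 = None encodes +oo *)
  (forall (theta Lambda1 : R) (Lambda2 : option R) (gamma : R),
     0 < theta -> 0 <= Lambda1 -> lt_ext Lambda1 Lambda2 -> 0 < gamma ->
     (forall x lam, 1 <= x -> Lambda1 < lam -> lt_ext lam Lambda2 ->
        phie2 (lam * x - beta) / phie2 (lam - beta) <= theta * Rpower x (- gamma)) ->
     exists c2 delta, 0 < c2 /\ 0 < delta < 1 /\
       forall t,
         (match Lambda2 with Some L2 => delta / L2 < t | None => 0 < t end) ->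
         (Lambda1 = 0 \/ t < delta / Lambda1) ->
         mu t >= - c2 * / (t ^ 3) * phie2 (/ t - beta) * exp (- (beta * t))).
Proof.
  intros _ Hderivs _ Hmu [l0 Hlevy] [a [b [_ [_ Hlk]]]] Hnu Hext Hd1 Hd2.
  apply impr_iff in Hlevy.
  assert (Hlk' : forall lam, 0 < lam ->
            impr (fun t => (1 - exp (- (lam * t))) * mu t) (phi lam - a - b * lam))
    by (intros; apply impr_iff; auto).
  pose proof (extension_levy_khintchine mu beta l0 Hmu Hnu Hlevy phi D a b Hderivs Hlk' phie Hext)
    as Hrep.
  split.
  - exact (density_upper_bound mu beta l0 Hmu Hnu Hlevy phie phie1 phie2 a b Hrep Hd1 Hd2).
  - exact (density_lower_bound mu beta l0 Hmu Hnu Hlevy phie phie1 phie2 a b Hrep Hd1 Hd2).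
Qed.
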